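(* Let $\alpha = 1-\frac{1}{W_{-1}(-2/e^3)+1}\approx 1.3871$, where $W_{-1}$ is the lower real branch of the Lambert $W$-function. For any $\epsilon>0$ and $\frac12>\delta>0$, for any fully-dynamic bin packing algorithm $\mathcal{A}$ with asymptotic competitive ratio $(\alpha-\epsilon)$ and additive term $o(\epsilon\cdot n^{\delta})$, there exists a fully-dynamic bin packing input with $n$ items on which $\mathcal{A}$ uses recourse at least $\Omega(\epsilon^2\cdot n^{1-\delta})$ under unit movement costs.
   Context: Fully-dynamic bin packing: a sequence of updates, each inserting or deleting an item; each item $i$ has a size $s_i\in[0,1]$ and a movement cost $c_i\ge 0$. At each time $t$ the algorithm must maintain a packing of the current set of items $\mathcal{I}_t$ into unit-capacity bins; $OPT(\mathcal{I}_t)$ is the minimum number of unit bins needed for $\mathcal{I}_t$. Moving item $i$ between bins costs $c_i$. An algorithm has asymptotic competitive ratio $\alpha'$, additive term $\beta$ and (amortized) recourse $\gamma$ if at every time $t$ it uses at most $\alpha'\cdot OPT(\mathcal{I}_t)+\beta$ bins and its total movement cost up to time $t$ is at most $\gamma\sum_{i=1}^t c_i$, where $c_i$ is the cost of the item updated at time $i$. Unit movement costs: $c_i=1$ for all items. *)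

From Stdlib Require Import Reals List Arith Lia Lra.
Import ListNotations.
Open Scope bool_scope.
Open Scope R_scope.

Definition is_LambertWm1 (x w : R) : Prop := w <= -1 /\ w * exp w = x.

(** The item
    inserted by the update at position [i] (0-based) is identified with [i];
    [Del j] deletes the item inserted at position [j]. *)
Inductive update : Type :=
| Ins (s : R)
| Del (j : nat).

Definition is_ins (u : update) : bool :=
  match u with Ins _ => true | Del _ => false end.

Definition is_del_of (i : nat) (u : update) : bool :=
  match u with Del j => Nat.eqb j i | Ins _ => false end.

Definition activeb (sigma : list update) (p i : nat) : bool :=
  Nat.ltb i p
  && (match nth_error sigma i with Some (Ins _) => true | _ => false end)
  && negb (existsb (is_del_of i) (firstn p sigma)).

Definition active_items (sigma : list update) (p : nat) : list nat :=
  filter (activeb sigma p) (seq 0 p).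

Definition item_size (sigma : list update) (i : nat) : R :=
  match nth_error sigma i with Some (Ins s) => s | _ => 0 end.

Definition valid_input (sigma : list update) : Prop :=
  (forall i s, nth_error sigma i = Some (Ins s) -> 0 <= s <= 1) /\
  (forall p j, nth_error sigma p = Some (Del j) -> activeb sigma p j = true).

Definition num_items (sigma : list update) : nat := length (filter is_ins sigma).

Definition packing := nat -> nat.

Definition load (sigma : list update) (p : nat) (f : packing) (b : nat) : R :=
  fold_right Rplus 0
    (map (item_size sigma) (filter (fun i => Nat.eqb (f i) b) (active_items sigma p))).

Definition feasible (sigma : list update) (p : nat) (f : packing) : Prop :=
  forall b, load sigma p f b <= 1.

Definition bins_used (sigma : list update) (p : nat) (f : packing) : nat :=
  length (nodup Nat.eq_dec (map f (active_items sigma p))).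

Definition packable_in (sigma : list update) (p k : nat) : Prop :=
  exists f : packing, feasible sigma p f /\
    forall i, In i (active_items sigma p) -> (f i < k)%nat.

Definition is_OPT (sigma : list update) (p k : nat) : Prop :=
  packable_in sigma p k /\ forall k', packable_in sigma p k' -> (k <= k')%nat.

(** A deterministic online algorithm: the packing it maintains after a
    prefix of updates is a function of that prefix. *)
Definition algorithm := list update -> packing.

Definition alg_state (A : algorithm) (sigma : list update) (p : nat) : packing :=
  A (firstn p sigma).

Definition competitive (A : algorithm) (ratio : R) (beta : nat -> R) : Prop :=
  forall sigma, valid_input sigma ->
  forall p, (p <= length sigma)%nat ->
    feasible sigma p (alg_state A sigma p) /\
    forall k, is_OPT sigma p k ->
      INR (bins_used sigma p (alg_state A sigma p)) <= ratio * INR k + beta (num_items sigma).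

Definition moves_at (A : algorithm) (sigma : list update) (p : nat) : nat :=
  length (filter (fun i => activeb sigma p i &&
                    negb (Nat.eqb (alg_state A sigma p i) (alg_state A sigma (p - 1) i)))
                 (active_items sigma (p - 1))).

Definition moves (A : algorithm) (sigma : list update) (t : nat) : nat :=
  fold_right Nat.add 0%nat (map (moves_at A sigma) (seq 1 t)).

(** A uses (amortized) recourse at least r on sigma (unit movement costs):
    r is not below the recourse, i.e. at some time t the movement cost so far
    is at least r times the sum of update costs (= t). *)
Definition recourse_at_least (A : algorithm) (sigma : list update) (r : R) : Prop :=
  exists t, (1 <= t <= length sigma)%nat /\ INR (moves A sigma t) >= r * INR t.

Definition little_o (g h : nat -> R) : Prop :=
  forall eta, 0 < eta -> exists N, forall n, (N <= n)%nat -> Rabs (g n) <= eta * Rabs (h n).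

(* The adversary keeps small items of total volume [V ~ n^delta] present throughout and plays
   rounds. Before each round it looks at the algorithm's packing and picks a level [j], with
   [j/H] between about [a'/(1+a')] and [1/2], such that more than about [a' V H / j] bins are
   loaded above [(j+1)/H]; here [a'] is slightly below [a* = alpha - 1]. It then inserts
   [~ V H / j] large items of size [1 - j/H] and deletes them again. The large items need
   distinct bins, each of which keeps room for only [j/H] of small items, while [OPT] is
   the number of large items; so with ratio [1 + a'] the algorithm must unload [1/H ~ eps]
   from each of [Omega(eps V)] heavy bins in every round. As small items have size [~ 2V/n],
   that is [Omega(eps^2 n)] moves per round, against [O(n)] updates for the [Theta(n/V)]
   rounds.
   A suitable level always exists: otherwise the layer-cake formula bounds the volume by
   [V (2a' + a' ln ((1+a')/(2a'))) + o(V) < V], since [a*] is the root of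
   [ln ((1+a)/(2a)) = 1/a - 2], which is where the Lambert function comes from. *)

From Stdlib Require Import Reals List Lia Lra Bool Classical ZArith.
Import ListNotations.
Open Scope R_scope.

Definition sumR (l : list R) : R := fold_right Rplus 0 l.

Lemma sumR_app l1 l2 : sumR (l1 ++ l2) = sumR l1 + sumR l2.
Proof. induction l1 as [|x l1 IH]; simpl; [lra|]. unfold sumR in *; simpl. rewrite IH. lra. Qed.

Lemma sumR_le {A} (f g : A -> R) (L : list A) :
  (forall x, In x L -> f x <= g x) -> sumR (map f L) <= sumR (map g L).
Proof.
  induction L as [|a L IH]; cbn; intros H; [lra|].
  unfold sumR in *; cbn.
  assert (f a <= g a) by (apply H; auto).
  assert (fold_right Rplus 0 (map f L) <= fold_right Rplus 0 (map g L)) by (apply IH; auto).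
  lra.
Qed.

Lemma sumR_const {A} (c : R) (L : list A) :
  sumR (map (fun _ => c) L) = INR (length L) * c.
Proof.
  induction L as [|a L IH]; unfold sumR in *; cbn [map fold_right length]; [cbn; lra|].
  rewrite S_INR, IH; lra.
Qed.

Lemma sumR_ones {A} (L : list A) : sumR (map (fun _ => 1) L) = INR (length L).
Proof. rewrite sumR_const. lra. Qed.

Lemma sumR_ge0 {A} (f : A -> R) (L : list A) :
  (forall x, In x L -> 0 <= f x) -> 0 <= sumR (map f L).
Proof.
  intros H. apply Rle_trans with (sumR (map (fun _ => 0) L)).
  - rewrite sumR_const; lra.
  - apply sumR_le; auto.
Qed.

Lemma sumR_add {A} (f g : A -> R) (L : list A) :
  sumR (map (fun x => f x + g x) L) = sumR (map f L) + sumR (map g L).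
Proof. induction L as [|a L IH]; unfold sumR in *; cbn; [lra|]. rewrite IH; lra. Qed.

Lemma sumR_scal {A} (c : R) (f : A -> R) (L : list A) :
  sumR (map (fun x => c * f x) L) = c * sumR (map f L).
Proof. induction L as [|a L IH]; unfold sumR in *; cbn; [lra|]. rewrite IH; lra. Qed.

Lemma sumR_filter_le {A} (f : A -> R) (P : A -> bool) (L : list A) :
  (forall x, In x L -> 0 <= f x) -> sumR (map f (filter P L)) <= sumR (map f L).
Proof.
  induction L as [|a L IH]; cbn; intros H; [unfold sumR; cbn; lra|].
  assert (0 <= f a) by auto.
  assert (sumR (map f (filter P L)) <= sumR (map f L)) by auto.
  destruct (P a); unfold sumR in *; cbn; lra.
Qed.

Lemma sumR_le_const {A} (w : A -> R) (L : list A) (M : R) :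
  (forall i, In i L -> w i <= M) -> sumR (map w L) <= INR (length L) * M.
Proof. intros H. rewrite <- sumR_const with (L := L). apply sumR_le; auto. Qed.

Lemma sumR_ge_const {A} (w : A -> R) (L : list A) (M : R) :
  (forall i, In i L -> M <= w i) -> INR (length L) * M <= sumR (map w L).
Proof. intros H. rewrite <- sumR_const with (L := L). apply sumR_le; auto. Qed.

Lemma sumR_eq_const {A} (w : A -> R) (L : list A) (M : R) :
  (forall i, In i L -> w i = M) -> sumR (map w L) = INR (length L) * M.
Proof. intros H. rewrite <- sumR_const with (L := L). f_equal. apply map_ext_in; auto. Qed.

Lemma sumR_ge_term {A} (w : A -> R) (L : list A) (x : A) :
  (forall i, In i L -> 0 <= w i) -> In x L -> w x <= sumR (map w L).
Proof.
  induction L as [|a L IH]; intros Hn Hx; [destruct Hx|].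
  unfold sumR in *; cbn [map fold_right].
  assert (0 <= fold_right Rplus 0 (map w L)).
  { apply (sumR_ge0 w L). intros; apply Hn; cbn; auto. }
  assert (0 <= w a) by (apply Hn; cbn; auto).
  destruct Hx as [<-|Hx]; [lra|].
  assert (w x <= fold_right Rplus 0 (map w L)) by (apply IH; auto; intros; apply Hn; cbn; auto).
  lra.
Qed.

Lemma sumR_ge_two_terms {A} (w : A -> R) (L : list A) (x y : A) :
  NoDup L -> (forall i, In i L -> 0 <= w i) -> In x L -> In y L -> x <> y ->
  w x + w y <= sumR (map w L).
Proof.
  induction L as [|a L IH]; intros HN Hn Hx Hy Hxy; [destruct Hx|].
  inversion HN; subst.
  assert (Hn' : forall i, In i L -> 0 <= w i) by (intros; apply Hn; cbn; auto).
  assert (0 <= sumR (map w L)) by (apply sumR_ge0; auto).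
  assert (0 <= w a) by (apply Hn; cbn; auto).
  change (w x + w y <= w a + sumR (map w L)).
  destruct Hx as [<-|Hx]; destruct Hy as [<-|Hy].
  - congruence.
  - assert (w y <= sumR (map w L)) by (apply sumR_ge_term; auto). lra.
  - assert (w x <= sumR (map w L)) by (apply sumR_ge_term; auto). lra.
  - assert (w x + w y <= sumR (map w L)) by (apply IH; auto). lra.
Qed.

Lemma sumR_indicator (U : list nat) (x : nat) (c : R) :
  NoDup U -> In x U -> sumR (map (fun b => if Nat.eqb x b then c else 0) U) = c.
Proof.
  induction U as [|u U IH]; intros HN Hin; [destruct Hin|].
  inversion HN; subst. change (sumR (map (fun b => if Nat.eqb x b then c else 0) (u :: U)))
    with ((if Nat.eqb x u then c else 0) + sumR (map (fun b => if Nat.eqb x b then c else 0) U)).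
  destruct Hin as [->|Hin].
  - rewrite Nat.eqb_refl, (sumR_eq_const _ _ 0); [lra|].
    intros b Hb. destruct (Nat.eqb_spec x b); subst; [contradiction|auto].
  - destruct (Nat.eqb_spec x u); [subst; contradiction|]. rewrite IH; auto. lra.
Qed.

Lemma sumR_partition (w : nat -> R) (f : nat -> nat) (L U : list nat) :
  NoDup U -> (forall i, In i L -> In (f i) U) ->
  sumR (map w L) = sumR (map (fun b => sumR (map w (filter (fun i => Nat.eqb (f i) b) L))) U).
Proof.
  intros HN. induction L as [|a L IH]; intros HL.
  - rewrite (sumR_eq_const _ U 0) by reflexivity. unfold sumR; cbn; lra.
  - transitivity (w a + sumR (map w L)); [reflexivity|].
    rewrite IH by (intros; apply HL; cbn; auto).
    transitivity (sumR (map (fun b => (if Nat.eqb (f a) b then w a else 0)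
        + sumR (map w (filter (fun i => Nat.eqb (f i) b) L))) U)).
    + rewrite sumR_add, sumR_indicator; auto. apply HL; cbn; auto.
    + f_equal. apply map_ext. intros b. cbn.
      destruct (Nat.eqb (f a) b); unfold sumR; cbn; lra.
Qed.

Lemma sumR_exchange {A B} (F : A -> B -> R) (U : list A) (J : list B) :
  sumR (map (fun b => sumR (map (fun j => F b j) J)) U) =
  sumR (map (fun j => sumR (map (fun b => F b j) U)) J).
Proof.
  induction U as [|u U IH].
  - rewrite (sumR_eq_const _ J 0) by reflexivity. unfold sumR; cbn; lra.
  - transitivity (sumR (map (fun j => F u j) J) + sumR (map (fun b => sumR (map (fun j => F b j) J)) U));
      [reflexivity|].
    rewrite IH, <- sumR_add. reflexivity.
Qed.

Lemma filter_filter {A} (f g : A -> bool) l :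
  filter f (filter g l) = filter (fun x => g x && f x) l.
Proof. induction l as [|a l IH]; cbn; auto. destruct (g a); cbn; [destruct (f a)|]; cbn; congruence. Qed.

Lemma length_filter_split2 {A} (P Q : A -> bool) L :
  length (filter P L) =
  (length (filter P (filter Q L)) + length (filter P (filter (fun x => negb (Q x)) L)))%nat.
Proof. induction L as [|a L IH]; cbn; auto. destruct (Q a); cbn; destruct (P a); cbn; lia. Qed.

Lemma length_filter_or {A} (P Q R : A -> bool) L :
  (forall x, In x L -> P x = true -> Q x = true \/ R x = true) ->
  (length (filter P L) <= length (filter Q L) + length (filter R L))%nat.
Proof.
  induction L as [|a L IH]; intros H; cbn; auto.
  assert (IH' := IH (fun x Hx => H x (or_intror Hx))).
  destruct (P a) eqn:EP.
  - destruct (H a (or_introl eq_refl) EP) as [E|E]; rewrite E; cbn;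
      [destruct (R a)|destruct (Q a)]; cbn; lia.
  - destruct (Q a); destruct (R a); cbn; lia.
Qed.

Definition notin (L : list nat) (i : nat) : bool := negb (existsb (Nat.eqb i) L).

Lemma notin_spec L i : notin L i = true <-> ~ In i L.
Proof.
  unfold notin. rewrite negb_true_iff, <- not_true_iff_false, existsb_exists.
  split.
  - intros H Hi. apply H. exists i. split; auto. apply Nat.eqb_refl.
  - intros H [y [Hy Hy']]. apply Nat.eqb_eq in Hy'; subst; auto.
Qed.

Definition present (S : list update) : list nat := active_items S (length S).

Definition deletes_earlier (S : list update) : Prop :=
  forall p j, nth_error S p = Some (Del j) -> (j < p)%nat.

Lemma activeb_app S T p i : (p <= length S)%nat -> activeb (S ++ T) p i = activeb S p i.
Proof.
  intros Hp. unfold activeb.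
  destruct (Nat.ltb i p) eqn:E; cbn; [|reflexivity].
  apply Nat.ltb_lt in E.
  rewrite nth_error_app1 by lia.
  rewrite firstn_app. replace (p - length S)%nat with 0%nat by lia. cbn.
  rewrite app_nil_r. reflexivity.
Qed.

Lemma active_items_app S T p : (p <= length S)%nat ->
  active_items (S ++ T) p = active_items S p.
Proof. intros Hp. unfold active_items. apply filter_ext. intros; apply activeb_app; auto. Qed.

Lemma active_items_prefix sigma p : (p <= length sigma)%nat ->
  active_items sigma p = present (firstn p sigma).
Proof.
  intros Hp. unfold present. rewrite firstn_length_le by auto.
  rewrite <- (firstn_skipn p sigma) at 1.
  apply active_items_app. rewrite firstn_length_le; lia.
Qed.

Lemma in_present S i : In i (present S) <-> activeb S (length S) i = true.
Proof.
  unfold present, active_items. rewrite filter_In, in_seq. split; [tauto|].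
  intros H; split; auto. unfold activeb in H.
  destruct (Nat.ltb i (length S)) eqn:E; cbn in H; [|discriminate].
  apply Nat.ltb_lt in E. lia.
Qed.

Lemma no_deletion_of_later S i : deletes_earlier S -> (length S <= i)%nat ->
  existsb (is_del_of i) S = false.
Proof.
  intros HD Hi. apply not_true_iff_false. intros H.
  apply existsb_exists in H. destruct H as [u [Hu Hd]].
  apply In_nth_error in Hu. destruct Hu as [p Hp].
  destruct u as [x|j]; cbn in Hd; [discriminate|].
  apply Nat.eqb_eq in Hd; subst j.
  assert (p < length S)%nat by (apply nth_error_Some; congruence).
  specialize (HD _ _ Hp). lia.
Qed.

Lemma activeb_snoc_old S u i : (i < length S)%nat ->
  activeb (S ++ [u]) (Datatypes.S (length S)) i =
  activeb S (length S) i && negb (is_del_of i u).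
Proof.
  intros Hi. unfold activeb.
  replace (Nat.ltb i (Datatypes.S (length S))) with true by (symmetry; apply Nat.ltb_lt; lia).
  replace (Nat.ltb i (length S)) with true by (symmetry; apply Nat.ltb_lt; lia).
  cbn [andb]. rewrite nth_error_app1 by lia.
  rewrite firstn_all2 by (rewrite length_app; cbn; lia).
  rewrite firstn_all, existsb_app. cbn [existsb]. rewrite orb_false_r, negb_orb, andb_assoc.
  reflexivity.
Qed.

Lemma present_snoc S u : present (S ++ [u]) =
  filter (fun i => negb (is_del_of i u)) (present S) ++
  filter (activeb (S ++ [u]) (Datatypes.S (length S))) [length S].
Proof.
  unfold present at 1, active_items.
  rewrite length_app. cbn. replace (length S + 1)%nat with (Datatypes.S (length S)) by lia.
  rewrite seq_S, filter_app. f_equal.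
  unfold present, active_items. rewrite filter_filter.
  apply filter_ext_in. intros i Hi. apply in_seq in Hi. apply activeb_snoc_old. lia.
Qed.

Lemma present_snoc_ins S x : deletes_earlier S -> present (S ++ [Ins x]) = present S ++ [length S].
Proof.
  intros HD. rewrite present_snoc, filter_true. f_equal. cbn. unfold activeb.
  replace (Nat.ltb (length S) (Datatypes.S (length S))) with true by (symmetry; apply Nat.ltb_lt; lia).
  rewrite nth_error_app2, Nat.sub_diag by lia. cbn [andb nth_error].
  rewrite firstn_all2 by (rewrite length_app; cbn; lia).
  rewrite existsb_app, no_deletion_of_later by (auto; lia). reflexivity.
Qed.

Lemma present_snoc_del S j :
  present (S ++ [Del j]) = filter (fun i => negb (Nat.eqb i j)) (present S).
Proof.
  rewrite present_snoc. cbn. unfold activeb.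
  rewrite nth_error_app2, Nat.sub_diag by lia. cbn. rewrite andb_false_r, app_nil_r.
  apply filter_ext. intros i. rewrite Nat.eqb_sym. reflexivity.
Qed.

Lemma valid_deletes_earlier S : valid_input S -> deletes_earlier S.
Proof.
  intros [_ Hd] p j Hp. specialize (Hd p j Hp). unfold activeb in Hd.
  destruct (Nat.ltb j p) eqn:E; [apply Nat.ltb_lt in E; auto|discriminate].
Qed.

Lemma valid_nil : valid_input [].
Proof. split; intros i s H; destruct i; discriminate. Qed.

Lemma valid_snoc S u : valid_input S ->
  (forall x, u = Ins x -> 0 <= x <= 1) ->
  (forall j, u = Del j -> In j (present S)) ->
  valid_input (S ++ [u]).
Proof.
  intros [Hs Hd] Hi Hdl. split.
  - intros i x Hx. destruct (lt_dec i (length S)).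
    + rewrite nth_error_app1 in Hx by auto. eauto.
    + rewrite nth_error_app2 in Hx by lia. destruct (i - length S)%nat; cbn in Hx.
      * inversion Hx; subst. apply Hi; auto.
      * destruct n0; discriminate.
  - intros p j Hp. destruct (lt_dec p (length S)).
    + rewrite nth_error_app1 in Hp by auto. rewrite activeb_app by lia. eauto.
    + rewrite nth_error_app2 in Hp by lia. destruct (p - length S)%nat eqn:E; cbn in Hp.
      * inversion Hp; subst. replace p with (length S) by lia.
        rewrite activeb_app by lia. apply in_present. apply Hdl; auto.
      * destruct n0; discriminate.
Qed.

Lemma valid_insert_block S x k : valid_input S -> 0 <= x <= 1 ->
  valid_input (S ++ repeat (Ins x) k) /\
  present (S ++ repeat (Ins x) k) = present S ++ seq (length S) k.
Proof.
  intros Hv Hx. induction k as [|k [IHv IHa]].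
  - cbn. rewrite !app_nil_r. auto.
  - replace (repeat (Ins x) (Datatypes.S k)) with (repeat (Ins x) k ++ [Ins x])
      by (replace (Datatypes.S k) with (k + 1)%nat by lia; rewrite repeat_app; reflexivity).
    rewrite app_assoc. split.
    + apply valid_snoc; auto; intros ? H; [inversion H; subst; auto|discriminate].
    + rewrite present_snoc_ins by (apply valid_deletes_earlier; auto). rewrite IHa.
      rewrite length_app, repeat_length, seq_S, app_assoc. reflexivity.
Qed.

Lemma valid_delete_block S L : valid_input S -> NoDup L -> incl L (present S) ->
  valid_input (S ++ map Del L) /\ present (S ++ map Del L) = filter (notin L) (present S).
Proof.
  revert S. induction L as [|j L IH] using rev_ind; intros S Hv HN HL.
  - cbn. rewrite app_nil_r. split; auto. symmetry; apply filter_true.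
  - pose proof (NoDup_app_remove_r _ _ HN) as HN'.
    pose proof (NoDup_remove_2 L [] j HN) as Hj. rewrite app_nil_r in Hj.
    destruct (IH S Hv HN' (proj1 (incl_app_inv _ _ HL))) as [IHv IHa].
    rewrite map_app, app_assoc. cbn.
    assert (Hjin : In j (present (S ++ map Del L))).
    { rewrite IHa. apply filter_In. split; [apply HL, in_or_app; cbn; auto|].
      apply notin_spec. exact Hj. }
    split.
    + apply valid_snoc; auto; intros ? H; [discriminate|inversion H; subst; auto].
    + rewrite present_snoc_del, IHa, filter_filter. apply filter_ext. intros i.
      unfold notin. rewrite existsb_app. cbn. rewrite orb_false_r, negb_orb. reflexivity.
Qed.

Definition insert_then_delete (S : list update) (x : R) (k : nat) : list update :=
  S ++ repeat (Ins x) k ++ map Del (seq (length S) k).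

Lemma insert_then_delete_spec S m x k :
  valid_input S -> present S = seq 0 m -> (m <= length S)%nat -> 0 <= x <= 1 ->
  valid_input (insert_then_delete S x k) /\ present (insert_then_delete S x k) = seq 0 m /\
  length (insert_then_delete S x k) = (length S + 2 * k)%nat.
Proof.
  intros Hv Ha Hm Hx. unfold insert_then_delete.
  destruct (valid_insert_block S x k Hv Hx) as [Hv1 Ha1].
  rewrite app_assoc.
  destruct (valid_delete_block (S ++ repeat (Ins x) k) (seq (length S) k) Hv1 (seq_NoDup _ _))
    as [Hv2 Ha2].
  { intros j Hj. rewrite Ha1. apply in_or_app; auto. }
  split; [auto|split].
  - rewrite Ha2, Ha1, Ha, filter_app.
    rewrite (filter_ext_in (notin (seq (length S) k)) (fun _ => true) (seq 0 m)).
    2:{ intros i Hi. apply notin_spec. rewrite in_seq in *. lia. }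
    rewrite (filter_ext_in (notin (seq (length S) k)) (fun _ => false) (seq (length S) k)).
    2:{ intros i Hi. apply not_true_iff_false. rewrite notin_spec. auto. }
    rewrite filter_true, filter_false, app_nil_r. reflexivity.
  - rewrite !length_app, repeat_length, length_map, length_seq. lia.
Qed.

Lemma num_items_app S T : num_items (S ++ T) = (num_items S + num_items T)%nat.
Proof. unfold num_items. rewrite filter_app, length_app. reflexivity. Qed.

Lemma num_items_repeat x k : num_items (repeat (Ins x) k) = k.
Proof. unfold num_items. induction k; cbn; auto. Qed.

Lemma num_items_insert_then_delete S x k :
  num_items (insert_then_delete S x k) = (num_items S + k)%nat.
Proof.
  unfold insert_then_delete. rewrite !num_items_app, num_items_repeat.
  replace (num_items (map Del _)) with 0%nat; [lia|].
  unfold num_items. induction (seq (length S) k); cbn; auto.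
Qed.

Lemma item_size_nonneg sigma i : valid_input sigma -> 0 <= item_size sigma i.
Proof.
  intros [Hs _]. unfold item_size. destruct (nth_error sigma i) as [[x|j]|] eqn:E; try lra.
  apply (Hs _ _ E).
Qed.

Lemma load_app S T f b : load (S ++ T) (length S) f b = load S (length S) f b.
Proof.
  unfold load. rewrite active_items_app by lia. f_equal. apply map_ext_in.
  intros i Hi. apply filter_In in Hi. destruct Hi as [Hi _].
  unfold active_items in Hi. apply filter_In in Hi. destruct Hi as [Hi _]. apply in_seq in Hi.
  unfold item_size. rewrite nth_error_app1 by lia. reflexivity.
Qed.

Lemma load_eq sigma p f b : load sigma p f b =
  sumR (map (item_size sigma) (filter (fun i => Nat.eqb (f i) b) (active_items sigma p))).
Proof. reflexivity. Qed.

Lemma volume_eq_sum_loads sigma p f :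
  sumR (map (item_size sigma) (active_items sigma p)) =
  sumR (map (load sigma p f) (nodup Nat.eq_dec (map f (active_items sigma p)))).
Proof.
  apply sumR_partition; [apply NoDup_nodup|].
  intros i Hi. apply nodup_In. apply in_map; auto.
Qed.

Lemma volume_le_bins_used sigma p f : feasible sigma p f ->
  sumR (map (item_size sigma) (active_items sigma p)) <= INR (bins_used sigma p f).
Proof.
  intros Hf. rewrite (volume_eq_sum_loads sigma p f). unfold bins_used.
  rewrite <- (Rmult_1_r (INR _)). apply sumR_le_const. intros b _. apply Hf.
Qed.

Lemma bins_used_ge sigma p f (Lb : list nat) :
  NoDup Lb -> (forall b, In b Lb -> exists i, In i (active_items sigma p) /\ f i = b) ->
  (length Lb <= bins_used sigma p f)%nat.
Proof.
  intros HN HL. unfold bins_used. apply NoDup_incl_length; auto.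
  intros b Hb. destruct (HL b Hb) as [i [Hi <-]]. apply nodup_In. apply in_map; auto.
Qed.

Lemma OPT_exists sigma p K : packable_in sigma p K ->
  exists k, (k <= K)%nat /\ is_OPT sigma p k.
Proof.
  induction K as [K IH] using (well_founded_induction lt_wf). intros HK.
  destruct (classic (exists k', (k' < K)%nat /\ packable_in sigma p k')) as [[k' [Hk' Hp]]|Hno].
  - destruct (IH k' Hk' Hp) as [k [Hk Ho]]. exists k; split; auto; lia.
  - exists K; split; auto. split; auto. intros k' Hk'.
    destruct (le_lt_dec K k'); auto. exfalso; apply Hno; eauto.
Qed.

Lemma competitive_bins_le A ratio beta sigma p K :
  competitive A ratio beta -> valid_input sigma -> (p <= length sigma)%nat ->
  packable_in sigma p K ->
  INR (bins_used sigma p (alg_state A sigma p)) <=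
  Rmax ratio 0 * INR K + beta (num_items sigma).
Proof.
  intros Hc Hv Hp HK. destruct (OPT_exists _ _ _ HK) as [k [Hk Ho]].
  destruct (Hc sigma Hv p Hp) as [_ Hb]. specialize (Hb k Ho).
  apply le_INR in Hk. assert (0 <= INR k) by apply pos_INR.
  unfold Rmax; destruct (Rle_dec ratio 0).
  - assert (ratio * INR k <= 0) by nra. lra.
  - assert (ratio * INR k <= ratio * INR K) by nra. lra.
Qed.

Lemma moves_add A sigma t d :
  moves A sigma (t + d) =
  (moves A sigma t + list_sum (map (moves_at A sigma) (seq (S t) d)))%nat.
Proof. unfold moves. rewrite seq_app, map_app. apply list_sum_app. Qed.

Lemma moved_items_le_moves_at A sigma p (SM : list nat) :
  NoDup SM ->
  (forall i, In i SM -> In i (active_items sigma (p - 1)) /\ activeb sigma p i = true) ->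
  (length (filter (fun i =>
     negb (Nat.eqb (alg_state A sigma p i) (alg_state A sigma (p - 1) i))) SM)
   <= moves_at A sigma p)%nat.
Proof.
  intros HN HS. unfold moves_at. apply NoDup_incl_length.
  - apply NoDup_filter; auto.
  - intros i Hi. apply filter_In in Hi. destruct Hi as [Hi Hc].
    destruct (HS i Hi) as [Ha Hb]. apply filter_In. split; auto. rewrite Hb, Hc; auto.
Qed.

(* An item whose bin differs after [d] steps was moved at one of these steps. *)
Lemma moved_items_le_moves A sigma p0 d (SM : list nat) :
  NoDup SM ->
  (forall p, (p0 < p <= p0 + d)%nat -> forall i, In i SM ->
      In i (active_items sigma (p - 1)) /\ activeb sigma p i = true) ->
  (length (filter (fun i =>
     negb (Nat.eqb (alg_state A sigma (p0 + d) i) (alg_state A sigma p0 i))) SM)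
   <= list_sum (map (moves_at A sigma) (seq (S p0) d)))%nat.
Proof.
  intros HN. induction d as [|d IH]; intros HS.
  - cbn. rewrite Nat.add_0_r, (filter_ext_in _ (fun _ => false)), filter_false; [auto|].
    intros i _. rewrite Nat.eqb_refl. reflexivity.
  - rewrite seq_S, map_app, list_sum_app. simpl.
    assert (IH' := IH (fun p Hp => HS p ltac:(lia))).
    assert (HM := moved_items_le_moves_at A sigma (S (p0 + d)) SM HN (HS (S (p0 + d)) ltac:(lia))).
    replace (S (p0 + d) - 1)%nat with (p0 + d)%nat in HM by lia.
    replace (p0 + S d)%nat with (S (p0 + d)) by lia.
    replace (S p0 + d)%nat with (S (p0 + d)) by lia.
    eapply Nat.le_trans; [apply length_filter_or with
      (Q := fun i => negb (Nat.eqb (alg_state A sigma (p0 + d) i) (alg_state A sigma p0 i)))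
      (R := fun i => negb (Nat.eqb (alg_state A sigma (S (p0 + d)) i)
                                   (alg_state A sigma (p0 + d) i)))|].
    + intros i _ H. apply negb_true_iff, Nat.eqb_neq in H.
      destruct (Nat.eqb_spec (alg_state A sigma (p0 + d) i) (alg_state A sigma p0 i)).
      * right. apply negb_true_iff, Nat.eqb_neq. congruence.
      * left. reflexivity.
    + lia.
Qed.

Lemma ln_le x y : 0 < x -> x <= y -> ln x <= ln y.
Proof.
  intros Hx Hxy. destruct (Rle_lt_or_eq_dec _ _ Hxy) as [H|H];
    [left; apply ln_increasing; auto|subst; lra].
Qed.

Lemma ln_le_sub1 x : 0 < x -> ln x <= x - 1.
Proof. intros Hx. pose proof (exp_ineq1_le (ln x)). rewrite exp_ln in H; lra. Qed.

Lemma ln_div x y : 0 < x -> 0 < y -> ln (x / y) = ln x - ln y.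
Proof.
  intros. unfold Rdiv. rewrite ln_mult, ln_Rinv; try lra. apply Rinv_0_lt_compat; auto.
Qed.

(* [w <= -1] with [w e^w = -2/e^3] forces [w < -2]; then [a = -1/(w+1)] satisfies
   [ln ((1+a)/(2a)) = ln (-w/2) = -w - 3 = 1/a - 2]. *)
Lemma lambertWm1_threshold w : is_LambertWm1 (- 2 / exp 3) w ->
  let a := -1 / (w + 1) in 0 < a < 1 /\ ln ((1 + a) / (2 * a)) = 1 / a - 2.
Proof.
  intros [Hw Hwe] a.
  assert (He1 : 2 < exp 1) by (pose proof (exp_ineq1 1 ltac:(lra)); lra).
  assert (E3 : exp 3 = exp 2 * exp 1) by (rewrite <- exp_plus; f_equal; lra).
  assert (Hpos2 : 0 < exp 2) by apply exp_pos.
  assert (Hm : (- w) * exp w = 2 / exp 3) by (unfold Rdiv in *; lra).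
  assert (Hwlt : w < -2).
  { destruct (Rlt_or_le w (-2)) as [H|H]; auto. exfalso.
    assert (Hew : exp (-2) <= exp w).
    { destruct (Rle_lt_or_eq_dec _ _ H) as [H'|H']; [left; apply exp_increasing; auto|subst; lra]. }
    assert (E2 : exp (-2) = / exp 2) by (rewrite <- exp_Ropp; f_equal; lra). rewrite E2 in Hew.
    assert (/ exp 2 <= (-w) * exp w).
    { assert (0 < exp w) by apply exp_pos. nra. }
    rewrite Hm, E3 in H0. unfold Rdiv in H0. rewrite Rinv_mult in H0.
    assert (0 < / exp 2) by (apply Rinv_0_lt_compat; auto).
    assert (/ exp 1 < / 2) by (apply Rinv_lt_contravar; lra).
    nra. }
  set (v := - (w + 1)).
  assert (Hv : 1 < v) by (unfold v; lra).
  replace a with (1 / v) by (unfold a, v; field; lra).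
  assert (Hl : ln (- w) + w = ln 2 - 3).
  { rewrite <- (ln_exp w) at 2. rewrite <- ln_mult by (try apply exp_pos; lra).
    rewrite Hm, ln_div by (try apply exp_pos; lra). rewrite ln_exp. lra. }
  split.
  - split; [apply Rdiv_lt_0_compat; lra|]. apply (Rmult_lt_reg_r v); [lra|].
    unfold Rdiv. rewrite Rmult_assoc, Rinv_l by lra. lra.
  - replace ((1 + 1 / v) / (2 * (1 / v))) with ((- w) / 2) by (unfold v; field; lra).
    rewrite ln_div by lra. replace (1 / (1 / v)) with v by (field; lra).
    unfold v. lra.
Qed.

(* At [a' = a] the left side equals [1]; below [a] it drops at rate at least [1/2]. *)
Lemma threshold_gain a a' : 0 < a' <= a -> a < 1 -> ln ((1 + a) / (2 * a)) = 1 / a - 2 ->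
  2 * a' + a' * ln ((1 + a') / (2 * a')) <= 1 - (a - a') / 2.
Proof.
  intros [Ha' Haa] Ha1 HL.
  set (t := (a - a') / ((1 + a) * a')).
  assert (Ht : 0 <= t).
  { unfold t. apply Rmult_le_pos; [lra|]. left; apply Rinv_0_lt_compat; nra. }
  assert (Heq : (1 + a') / (2 * a') = ((1 + a) / (2 * a)) * (1 + t)) by (unfold t; field; lra).
  rewrite Heq, ln_mult, HL; [|apply Rdiv_lt_0_compat; lra|lra].
  assert (ln (1 + t) <= t) by (pose proof (ln_le_sub1 (1 + t)); lra).
  assert (a' * ln (1 + t) <= a' * t) by (apply Rmult_le_compat_l; lra).
  assert (Hat : a' * t = (a - a') / (1 + a)) by (unfold t; field; lra).
  assert (E : 1 - (a - a') / 2 - ((a - a') / (1 + a) + a' * (1 / a - 2) + 2 * a') =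
              (a - a') * (1 / (a * (1 + a)) - 1 / 2)) by (field; lra).
  assert (1 / (a * (1 + a)) >= 1 / 2).
  { apply Rle_ge. apply Rmult_le_reg_r with (2 * (a * (1 + a))); [nra|].
    unfold Rdiv. field_simplify; nra. }
  nra.
Qed.

Lemma harmonic_le_ln j0 d : (2 <= j0)%nat ->
  sumR (map (fun i => 1 / INR i) (seq j0 d)) <= ln (INR (j0 + d - 1)) - ln (INR (j0 - 1)).
Proof.
  intros Hj. induction d as [|d IH].
  - rewrite Nat.add_0_r. unfold sumR; cbn; lra.
  - rewrite seq_S, map_app, sumR_app.
    set (x := INR (j0 + d)).
    assert (Hx : 2 <= x) by (unfold x; replace 2 with (INR 2) by (cbn; lra); apply le_INR; lia).
    assert (E1 : INR (j0 + S d - 1) = x) by (unfold x; f_equal; lia).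
    assert (E2 : INR (j0 + d - 1) = x - 1) by (unfold x; rewrite minus_INR by lia; cbn; lra).
    rewrite E2 in IH. rewrite E1.
    unfold sumR at 2; cbn. fold x.
    assert (ln (x - 1) - ln x <= - (1 / x)).
    { rewrite <- ln_div by lra. pose proof (ln_le_sub1 ((x - 1) / x) ltac:(apply Rdiv_lt_0_compat; lra)).
      replace ((x - 1) / x - 1) with (- (1 / x)) in H by (field; lra). auto. }
    lra.
Qed.

(* The thresholds [j/H] for [j0 <= j < J] start near [a'/(1+a')] and end near [1/2]. *)
Lemma harmonic_thresholds_le (H J j0 : nat) (a' : R) :
  INR H = 2 * INR J + 2 -> (2 <= j0 <= J)%nat -> 0 < a' ->
  INR H * a' / (1 + a') < INR j0 + 1 -> 4 * (1 + a') <= INR H * a' ->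
  sumR (map (fun i => 1 / INR i) (seq j0 (J - j0))) <=
  ln ((1 + a') / (2 * a')) + 4 * (1 + a') / (INR H * a').
Proof.
  intros HHr Hj Ha' Hj0b Hu. set (Hr := INR H) in *.
  eapply Rle_trans; [apply harmonic_le_ln; lia|].
  replace (j0 + (J - j0) - 1)%nat with (J - 1)%nat by lia.
  set (D := Hr * a' / (1 + a') - 2).
  assert (HD4 : 4 <= Hr * a' / (1 + a')).
  { apply Rmult_le_reg_r with (1 + a'); [lra|].
    replace (Hr * a' / (1 + a') * (1 + a')) with (Hr * a') by (field; lra). lra. }
  assert (HD : 2 <= D) by (unfold D; lra).
  assert (Hj1 : D <= INR (j0 - 1)) by (rewrite minus_INR by lia; cbn; unfold D; lra).
  assert (HJm : INR (J - 1) <= Hr / 2) by (rewrite minus_INR by lia; cbn; lra).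
  assert (HJm0 : 0 < INR (J - 1)) by (apply lt_0_INR; lia).
  assert (ln (INR (J - 1)) <= ln (Hr / 2)) by (apply ln_le; lra).
  assert (ln D <= ln (INR (j0 - 1))) by (apply ln_le; lra).
  set (u := 2 * (1 + a') / (Hr * a')).
  assert (Hu1 : u <= 1 / 2).
  { unfold u. apply Rmult_le_reg_r with (Hr * a'); [nra|].
    unfold Rdiv. rewrite Rmult_assoc, Rinv_l by nra. lra. }
  assert (Hu0 : 0 < u) by (unfold u; apply Rdiv_lt_0_compat; nra).
  assert (ED : Hr / 2 / D = (1 + a') / (2 * a') * (1 / (1 - u))).
  { replace (1 - u) with (D * (1 + a') / (Hr * a')) by (unfold D, u; field; split; lra).
    field. repeat split; lra. }
  assert (ln (Hr / 2) - ln D = ln ((1 + a') / (2 * a')) + ln (1 / (1 - u))).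
  { rewrite <- ln_div, ED by lra. apply ln_mult; apply Rdiv_lt_0_compat; lra. }
  assert (ln (1 / (1 - u)) <= 2 * u).
  { pose proof (ln_le_sub1 (1 / (1 - u)) ltac:(apply Rdiv_lt_0_compat; lra)).
    assert (1 / (1 - u) - 1 <= 2 * u).
    { apply Rmult_le_reg_r with (1 - u); [lra|]. field_simplify; [nra|lra]. }
    lra. }
  assert (2 * u = 4 * (1 + a') / (Hr * a')) by (unfold u; field; nra).
  lra.
Qed.

Definition above (z y : R) : R := if Rlt_dec z y then 1 else 0.

Definition count_above (U : list nat) (l : nat -> R) (z : R) : R :=
  INR (length (filter (fun b => if Rlt_dec z (l b) then true else false) U)).

Lemma sumR_above (z : R) (l : nat -> R) (U : list nat) :
  sumR (map (fun b => above z (l b)) U) = count_above U l z.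
Proof.
  unfold count_above. induction U as [|u U IH]; [unfold sumR; cbn; auto|].
  change (above z (l u) + sumR (map (fun b => above z (l b)) U) =
          INR (length (filter (fun b => if Rlt_dec z (l b) then true else false) (u :: U)))).
  rewrite IH. unfold above. cbn.
  destruct (Rlt_dec z (l u)); cbn [length]; [rewrite S_INR|]; lra.
Qed.

Lemma min_le_staircase (y h : R) (a n : nat) : 0 < h ->
  Rmin y (INR (a + n) * h) <= INR a * h + sumR (map (fun j => h * above (INR j * h) y) (seq a n)).
Proof.
  intros Hh. induction n as [|n IH].
  - rewrite Nat.add_0_r. unfold sumR; cbn. pose proof (Rmin_r y (INR a * h)). lra.
  - rewrite seq_S, map_app, sumR_app. unfold sumR at 2; cbn.
    replace (a + S n)%nat with (S (a + n)) by lia. rewrite S_INR, Rmult_plus_distr_r, Rmult_1_l.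
    unfold above at 2. destruct (Rlt_dec (INR (a + n) * h) y) as [Hlt|Hge].
    + rewrite Rmin_right in IH by lra. pose proof (Rmin_r y (INR (a + n) * h + h)). lra.
    + rewrite Rmin_left in IH by lra. pose proof (Rmin_l y (INR (a + n) * h + h)). lra.
Qed.

(* Layer cake formula for a single value [y <= 1], cut at the levels [j h], [a <= j <= a + n]. *)
Lemma le_layer_sum (y h : R) (a n : nat) : 0 < h -> y <= 1 ->
  y <= INR a * h + sumR (map (fun j => h * above (INR j * h) y) (seq a n))
       + (1 - INR (a + n) * h) * above (INR (a + n) * h) y.
Proof.
  intros Hh Hy. pose proof (min_le_staircase y h a n Hh).
  unfold above at 2. destruct (Rlt_dec (INR (a + n) * h) y).
  - rewrite Rmin_right in H by lra. lra.
  - rewrite Rmin_left in H by lra. lra.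
Qed.

Lemma layer_cake_bound (U : list nat) (l : nat -> R) (h : R) (a n : nat) : 0 < h ->
  (forall b, In b U -> l b <= 1) ->
  sumR (map l U) <= INR (length U) * (INR a * h) +
     sumR (map (fun j => h * count_above U l (INR j * h)) (seq a n)) +
     (1 - INR (a + n) * h) * count_above U l (INR (a + n) * h).
Proof.
  intros Hh Hl.
  eapply Rle_trans.
  { apply sumR_le with (g := fun b => INR a * h
       + sumR (map (fun j => h * above (INR j * h) (l b)) (seq a n))
       + (1 - INR (a + n) * h) * above (INR (a + n) * h) (l b)).
    intros b Hb. apply le_layer_sum; auto. }
  rewrite !sumR_add, sumR_const, sumR_scal, sumR_above.
  rewrite (sumR_exchange (fun b j => h * above (INR j * h) (l b))).
  apply Req_le. do 3 f_equal. apply map_ext. intros j.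
  rewrite sumR_scal, sumR_above. reflexivity.
Qed.

Section ThresholdCounts.

Variables (U : list nat) (l : nat -> R) (H J j0 : nat) (a' V beta E0 h : R) (kk : nat -> R).

Hypothesis Hl : forall b, In b U -> l b <= 1.
Hypothesis Hcount : forall j, (j0 <= j <= J)%nat ->
  count_above U l (INR (S j) * h) <= a' * kk j + beta + E0.
Hypothesis Hkk : forall j, (j0 <= j <= J)%nat -> kk j <= V * INR H / INR j + 1.
Hypothesis HHr : INR H = 2 * INR J + 2.
Hypothesis Hh : h = 1 / INR H.
Hypothesis Hj : (2 <= j0 <= J)%nat.
Hypothesis Hj0a : INR j0 <= INR H * a' / (1 + a').
Hypothesis Hj0b : INR H * a' / (1 + a') < INR j0 + 1.
Hypothesis Ha' : 0 < a'.
Hypothesis Hu : 4 * (1 + a') <= INR H * a'.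
Hypothesis Hbeta : 0 <= beta.
Hypothesis HV : 0 <= V.
Hypothesis HE0 : 0 <= E0.

Let J_ge1 : 1 <= INR J.
Proof. replace 1 with (INR 1) by (cbn; lra). apply le_INR; lia. Qed.

Let h_pos : 0 < h.
Proof. pose proof J_ge1. rewrite Hh. apply Rdiv_lt_0_compat; lra. Qed.

Lemma count_bottom_layers :
  INR (length U) <= (1 + a') * V + beta ->
  INR (length U) * (INR (S j0) * h) <= a' * V + (1 + a') * V * h + beta.
Proof.
  intros HU. pose proof J_ge1. rewrite S_INR.
  assert (Hx : (INR j0 + 1) * h <= a' / (1 + a') + h).
  { rewrite Hh. apply Rmult_le_reg_r with (INR H); [lra|].
    replace ((INR j0 + 1) * (1 / INR H) * INR H) with (INR j0 + 1) by (field; lra).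
    replace ((a' / (1 + a') + 1 / INR H) * INR H) with (INR H * a' / (1 + a') + 1)
      by (field; lra). lra. }
  assert (Hx1 : (INR j0 + 1) * h <= 1).
  { rewrite Hh. apply Rmult_le_reg_r with (INR H); [lra|].
    replace ((INR j0 + 1) * (1 / INR H) * INR H) with (INR j0 + 1) by (field; lra).
    assert (INR j0 <= INR J) by (apply le_INR; lia). lra. }
  assert (0 <= (INR j0 + 1) * h) by (pose proof (pos_INR j0); pose proof h_pos; nra).
  assert (INR (length U) * ((INR j0 + 1) * h) <= ((1 + a') * V + beta) * ((INR j0 + 1) * h))
    by (apply Rmult_le_compat_r; lra).
  assert (((1 + a') * V) * ((INR j0 + 1) * h) <= ((1 + a') * V) * (a' / (1 + a') + h))
    by (apply Rmult_le_compat_l; nra).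
  assert (((1 + a') * V) * (a' / (1 + a') + h) = a' * V + (1 + a') * V * h) by (field; lra).
  nra.
Qed.

Lemma count_middle_layer_sum :
  sumR (map (fun j => h * count_above U l (INR j * h)) (seq (S j0) (J - j0))) <=
  a' * V * ln ((1 + a') / (2 * a')) + 4 * (1 + a') * V * h + (a' + beta + E0) / 2.
Proof.
  pose proof J_ge1. pose proof h_pos. set (F := a' + beta + E0). set (n := (J - j0)%nat).
  assert (HT : sumR (map (fun j => h * count_above U l (INR j * h)) (seq (S j0) n)) <=
               a' * V * sumR (map (fun i => 1 / INR i) (seq j0 n)) + INR n * (h * F)).
  { rewrite <- seq_shift, map_map.
    replace (INR n) with (INR (length (seq j0 n))) by (rewrite length_seq; auto).
    rewrite <- sumR_scal, <- sumR_const, <- sumR_add.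
    apply sumR_le. intros i Hi. apply in_seq in Hi.
    assert (C1 := Hcount i ltac:(unfold n in Hi; lia)).
    assert (C2 := Hkk i ltac:(unfold n in Hi; lia)).
    assert (2 <= INR i) by (replace 2 with (INR 2) by (cbn; lra); apply le_INR; lia).
    assert (a' * kk i <= a' * (V * INR H / INR i + 1)) by (apply Rmult_le_compat_l; lra).
    assert (h * count_above U l (INR (S i) * h) <= h * (a' * (V * INR H / INR i + 1) + beta + E0))
      by (apply Rmult_le_compat_l; lra).
    assert (h * (a' * (V * INR H / INR i + 1) + beta + E0) = a' * V * (1 / INR i) + h * F)
      by (unfold F; rewrite Hh; field; lra).
    lra. }
  assert (HnF : INR n * (h * F) <= F / 2).
  { assert (INR n * h <= 1 / 2).
    { rewrite Hh. assert (INR n <= INR J) by (apply le_INR; unfold n; lia).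
      apply Rmult_le_reg_r with (INR H); [lra|].
      replace (INR n * (1 / INR H) * INR H) with (INR n) by (field; lra). lra. }
    assert (0 <= F) by (unfold F; lra). rewrite <- Rmult_assoc. nra. }
  assert (HS := harmonic_thresholds_le H J j0 a' HHr Hj Ha' Hj0b Hu). fold n in HS.
  assert (a' * V * sumR (map (fun i => 1 / INR i) (seq j0 n)) <=
          a' * V * (ln ((1 + a') / (2 * a')) + 4 * (1 + a') / (INR H * a')))
    by (apply Rmult_le_compat_l; nra).
  assert (a' * V * (4 * (1 + a') / (INR H * a')) = 4 * (1 + a') * V * h) by (rewrite Hh; field; nra).
  nra.
Qed.

Lemma count_top_layer :
  (1 - INR (S J) * h) * count_above U l (INR (S J) * h) <=
  a' * V + 4 * a' * V * h + (a' + beta + E0) / 2.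
Proof.
  pose proof J_ge1. pose proof h_pos.
  assert (E : 1 - INR (S J) * h = 1 / 2) by (rewrite Hh, S_INR, HHr; field; lra).
  rewrite E.
  assert (C1 := Hcount J ltac:(lia)). assert (C2 := Hkk J ltac:(lia)).
  assert (a' * kk J <= a' * (V * INR H / INR J + 1)) by (apply Rmult_le_compat_l; lra).
  assert (V * INR H / INR J = 2 * V + 2 * V / INR J) by (rewrite HHr; field; lra).
  assert (V / INR J <= 4 * V * h).
  { rewrite Hh, HHr. apply Rmult_le_reg_r with (INR J * (2 * INR J + 2)); [nra|].
    field_simplify; [|lra|lra]. nra. }
  assert (a' * (V / INR J) <= a' * (4 * V * h)) by (apply Rmult_le_compat_l; lra).
  nra.
Qed.

Lemma volume_le_threshold_counts :
  INR (length U) <= (1 + a') * V + beta ->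
  sumR (map l U) <=
  V * (2 * a' + a' * ln ((1 + a') / (2 * a'))) + (5 + 9 * a') * V * h + a' + 2 * beta + E0.
Proof.
  intros HU.
  pose proof (layer_cake_bound U l h (S j0) (J - j0) h_pos Hl) as VB.
  replace (S j0 + (J - j0))%nat with (S J) in VB by lia.
  pose proof (count_bottom_layers HU). pose proof count_middle_layer_sum. pose proof count_top_layer.
  nra.
Qed.

Variable astar : R.
Hypothesis Haa : a' <= astar.
Hypothesis Ha1 : astar < 1.
Hypothesis HL : ln ((1 + astar) / (2 * astar)) = 1 / astar - 2.
Hypothesis Hh14 : 14 * h <= (astar - a') / 8.

(* With [threshold_gain], [volume_le_threshold_counts] reads
   [V <= V - 3 V (astar - a') / 8 + a' + 2 beta + E0]. *)
Lemma threshold_counts_bound_volume :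
  V = sumR (map l U) -> INR (length U) <= (1 + a') * V + beta ->
  3 * V * (astar - a') / 8 <= a' + 2 * beta + E0.
Proof.
  intros HVs HU. pose proof h_pos.
  pose proof (volume_le_threshold_counts HU) as VB. rewrite <- HVs in VB.
  pose proof (threshold_gain astar a' ltac:(lra) Ha1 HL) as G.
  assert (V * (2 * a' + a' * ln ((1 + a') / (2 * a'))) <= V * (1 - (astar - a') / 2))
    by (apply Rmult_le_compat_l; lra).
  assert ((5 + 9 * a') * (V * h) <= 14 * (V * h)).
  { apply Rmult_le_compat_r; [apply Rmult_le_pos|]; lra. }
  assert (V * (14 * h) <= V * ((astar - a') / 8)) by (apply Rmult_le_compat_l; lra).
  nra.
Qed.

End ThresholdCounts.

Lemma count_same_quotient (L : list nat) q b : NoDup L -> (0 < q)%nat ->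
  (length (filter (fun i => Nat.eqb (i / q) b) L) <= q)%nat.
Proof.
  intros HN Hq. apply Nat.le_trans with (length (seq (b * q) q)); [|rewrite length_seq; lia].
  apply NoDup_incl_length; [apply NoDup_filter; auto|].
  intros i Hi. apply filter_In in Hi. destruct Hi as [_ Hi]. apply Nat.eqb_eq in Hi.
  apply in_seq. pose proof (Nat.div_mod i q ltac:(lia)). pose proof (Nat.mod_upper_bound i q ltac:(lia)).
  rewrite Hi in H. nia.
Qed.

(* [m] items of size [1/Q]: at most [q <= Q] of them per bin load a bin to [q/Q]. *)
Lemma small_items_group_load sigma m Q q b :
  (forall i, (i < m)%nat -> item_size sigma i = 1 / INR Q) -> (0 < Q)%nat -> (0 < q)%nat ->
  sumR (map (item_size sigma) (filter (fun i => Nat.eqb (i / q) b) (seq 0 m))) <= INR q / INR Q.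
Proof.
  intros Hs HQ Hq. assert (HQr : 0 < INR Q) by (apply lt_0_INR; lia).
  eapply Rle_trans. apply sumR_le_const with (M := 1 / INR Q).
  { intros i Hi. apply filter_In in Hi. destruct Hi as [Hi _]. apply in_seq in Hi. rewrite Hs by lia. lra. }
  assert (INR (length (filter (fun i => Nat.eqb (i / q) b) (seq 0 m))) <= INR q)
    by (apply le_INR, count_same_quotient; auto; apply seq_NoDup).
  apply Rmult_le_reg_r with (INR Q); [lra|].
  replace (INR (length (filter (fun i : nat => Nat.eqb (i / q) b) (seq 0 m))) * (1 / INR Q) * INR Q)
    with (INR (length (filter (fun i : nat => Nat.eqb (i / q) b) (seq 0 m)))) by (field; lra).
  replace (INR q / INR Q * INR Q) with (INR q) by (field; lra). lra.
Qed.

Lemma packable_small_items sigma p m Q V : active_items sigma p = seq 0 m ->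
  (forall i, (i < m)%nat -> item_size sigma i = 1 / INR Q) -> (0 < Q)%nat -> (m <= V * Q)%nat ->
  packable_in sigma p V.
Proof.
  intros Ha Hs HQ Hm. exists (fun i : nat => (i / Q)%nat). split.
  - intros b. unfold load. rewrite Ha.
    assert (HQr : 0 < INR Q) by (apply lt_0_INR; lia).
    pose proof (small_items_group_load sigma m Q Q b Hs HQ HQ).
    replace (INR Q / INR Q) with 1 in H by (field; lra). exact H.
  - intros i Hi. rewrite Ha in Hi. apply in_seq in Hi. apply Nat.Div0.div_lt_upper_bound. lia.
Qed.

(* Each of the [k] large items of size [1 - q/Q] shares its bin with [q] small items. *)
Lemma packable_small_and_large sigma p m Q q k p0 :
  active_items sigma p = seq 0 m ++ seq p0 k ->
  (forall i, (i < m)%nat -> item_size sigma i = 1 / INR Q) ->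
  (forall i, (p0 <= i < p0 + k)%nat -> item_size sigma i = 1 - INR q / INR Q) ->
  (m <= p0)%nat -> (0 < q)%nat -> (q <= Q)%nat -> (m <= k * q)%nat ->
  packable_in sigma p k.
Proof.
  intros Ha Hs Hl Hm Hq HqQ Hmk.
  assert (HQr : 0 < INR Q) by (apply lt_0_INR; lia).
  exists (fun i : nat => if Nat.ltb i m then (i / q)%nat else (i - p0)%nat). split.
  - intros b. unfold load. rewrite Ha, filter_app, map_app, sumR_app.
    rewrite (filter_ext_in _ (fun i => Nat.eqb (i / q) b) (seq 0 m)).
    2:{ intros i Hi. apply in_seq in Hi.
        replace (Nat.ltb i m) with true by (symmetry; apply Nat.ltb_lt; lia). auto. }
    rewrite (filter_ext_in _ (fun i => Nat.eqb (i - p0) b) (seq p0 k)).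
    2:{ intros i Hi. apply in_seq in Hi.
        replace (Nat.ltb i m) with false by (symmetry; apply Nat.ltb_ge; lia). auto. }
    pose proof (small_items_group_load sigma m Q q b Hs ltac:(lia) Hq).
    assert (Hc : (length (filter (fun i => Nat.eqb (i - p0) b) (seq p0 k)) <= 1)%nat).
    { apply Nat.le_trans with (length (seq (p0 + b) 1)); [|rewrite length_seq; lia].
      apply NoDup_incl_length; [apply NoDup_filter, seq_NoDup|].
      intros i Hi. apply filter_In in Hi. destruct Hi as [Hi Hb]. apply Nat.eqb_eq in Hb.
      apply in_seq in Hi. apply in_seq. lia. }
    assert (INR q / INR Q <= 1).
    { apply Rmult_le_reg_r with (INR Q); [lra|].
      replace (INR q / INR Q * INR Q) with (INR q) by (field; lra).
      rewrite Rmult_1_l. apply le_INR; lia. }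
    assert (sumR (map (item_size sigma) (filter (fun i => Nat.eqb (i - p0) b) (seq p0 k)))
            <= 1 - INR q / INR Q).
    { eapply Rle_trans. apply sumR_le_const with (M := 1 - INR q / INR Q).
      { intros i Hi. apply filter_In in Hi. destruct Hi as [Hi _]. apply in_seq in Hi.
        rewrite Hl by lia. lra. }
      apply le_INR in Hc. cbn in Hc. nra. }
    lra.
  - intros i Hi. rewrite Ha in Hi. apply in_app_or in Hi. destruct Hi as [Hi|Hi]; apply in_seq in Hi.
    + replace (Nat.ltb i m) with true by (symmetry; apply Nat.ltb_lt; lia).
      apply Nat.Div0.div_lt_upper_bound. lia.
    + replace (Nat.ltb i m) with false by (symmetry; apply Nat.ltb_ge; lia). lia.
Qed.

(** * One round: [k] large items arrive while [m] small items are present *)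

Section RoundLowerBound.

Variables (sigma : list update) (p0 k m Q q hq : nat) (f0 f1 : packing).

Hypothesis Hv : valid_input sigma.
Hypothesis Ha0 : active_items sigma p0 = seq 0 m.
Hypothesis Ha1 : active_items sigma (p0 + k) = seq 0 m ++ seq p0 k.
Hypothesis Hm : (m <= p0)%nat.
Hypothesis Hs : forall i, (i < m)%nat -> item_size sigma i = 1 / INR Q.
Hypothesis Hl : forall i, (p0 <= i < p0 + k)%nat -> item_size sigma i = 1 - INR q / INR Q.
Hypothesis HQ : (0 < Q)%nat.
Hypothesis Hq : (2 * q < Q)%nat.
Hypothesis Hhq : (1 <= hq)%nat.
Hypothesis Hf : feasible sigma (p0 + k) f1.

Let small := seq 0 m.
Let large := seq p0 k.
Let in_bin (f : packing) (b : nat) (i : nat) : bool := Nat.eqb (f i) b.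
Let hosts (L : list nat) (b : nat) : bool := existsb (fun i => in_bin f1 b i) L.
Let moved := filter (fun i => negb (Nat.eqb (f1 i) (f0 i))) small.
Let stayed (b : nat) := filter (in_bin f0 b) (filter (in_bin f1 b) small).
Let heavy := filter (fun b => if Rlt_dec (INR (q + hq) / INR Q) (load sigma p0 f0 b) then true else false)
                    (nodup Nat.eq_dec (map f0 small)).
Let reused (b : nat) : bool := negb (hosts large b) && hosts small b.

Let Q_pos : 0 < INR Q.
Proof. apply lt_0_INR; lia. Qed.

Let size_nonneg i : 0 <= item_size sigma i.
Proof. apply item_size_nonneg; auto. Qed.

Lemma load_before_round b :
  load sigma p0 f0 b = INR (length (filter (in_bin f0 b) small)) * (1 / INR Q).
Proof.
  rewrite load_eq, Ha0. apply sumR_eq_const. intros i Hi. apply filter_In in Hi.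
  destruct Hi as [Hi _]. apply in_seq in Hi. apply Hs. lia.
Qed.

Lemma large_items_separate i j : In i large -> In j large -> f1 i = f1 j -> i = j.
Proof.
  intros Hi Hj Hij. destruct (Nat.eq_dec i j) as [|Hne]; auto. exfalso.
  assert (Hnd : NoDup (small ++ large)).
  { apply NoDup_app; try apply seq_NoDup. intros a Ha Hb. apply in_seq in Ha, Hb. lia. }
  pose proof (Hf (f1 i)) as Hfi. rewrite load_eq, Ha1 in Hfi. fold small large in Hfi.
  assert (Hsum : item_size sigma i + item_size sigma j <=
          sumR (map (item_size sigma) (filter (fun i' => Nat.eqb (f1 i') (f1 i)) (small ++ large)))).
  { apply sumR_ge_two_terms; [apply NoDup_filter; auto|intros; apply size_nonneg| | |auto];
      apply filter_In; (split; [apply in_or_app; auto|]); [|rewrite Hij]; apply Nat.eqb_refl. }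
  apply in_seq in Hi, Hj. rewrite (Hl i), (Hl j) in Hsum by lia.
  assert (2 * INR q < INR Q).
  { replace (2 * INR q) with (INR (2 * q)) by (rewrite mult_INR; cbn; ring). apply lt_INR; lia. }
  assert (INR q / INR Q < 1 / 2).
  { apply Rmult_lt_reg_r with (2 * INR Q); [lra|].
    replace (INR q / INR Q * (2 * INR Q)) with (2 * INR q) by (field; lra). lra. }
  lra.
Qed.

(* Room left by a large item: [q/Q], i.e. [q] small items. *)
Lemma stayed_le b i : In i large -> f1 i = b -> (length (stayed b) <= q)%nat.
Proof.
  intros Hi Hib. pose proof (Hf b) as Hfb.
  rewrite load_eq, Ha1, filter_app, map_app, sumR_app in Hfb. fold small large in Hfb.
  assert (A1 : sumR (map (item_size sigma) (stayed b)) <=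
               sumR (map (item_size sigma) (filter (in_bin f1 b) small)))
    by (apply sumR_filter_le; intros; apply size_nonneg).
  assert (A2 : sumR (map (item_size sigma) (stayed b)) = INR (length (stayed b)) * (1 / INR Q)).
  { apply sumR_eq_const. intros i' Hi'. apply filter_In in Hi'. destruct Hi' as [Hi' _].
    apply filter_In in Hi'. destruct Hi' as [Hi' _]. apply in_seq in Hi'. apply Hs; lia. }
  assert (A3 : item_size sigma i <= sumR (map (item_size sigma) (filter (in_bin f1 b) large))).
  { apply sumR_ge_term; [intros; apply size_nonneg|]. apply filter_In; split; auto.
    apply Nat.eqb_eq; auto. }
  apply in_seq in Hi. rewrite Hl in A3 by lia.
  apply INR_le. apply Rmult_le_reg_r with (1 / INR Q); [apply Rdiv_lt_0_compat; lra|].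
  replace (INR q * (1 / INR Q)) with (INR q / INR Q) by (field; lra).
  unfold in_bin, small, large in *. lra.
Qed.

Lemma small_in_bin_split b :
  length (filter (in_bin f0 b) small) =
  (length (stayed b) + length (filter (in_bin f0 b) moved))%nat.
Proof.
  rewrite (length_filter_split2 _ (fun i => Nat.eqb (f1 i) (f0 i))). f_equal.
  unfold stayed, in_bin. rewrite !filter_filter. f_equal. apply filter_ext. intros i.
  destruct (Nat.eqb_spec (f0 i) b); destruct (Nat.eqb_spec (f1 i) (f0 i));
    destruct (Nat.eqb_spec (f1 i) b); cbn; auto; subst; congruence.
Qed.

(* A heavy bin that is not reused either received a large item, leaving room for only
   [q] of its more than [q + hq] small items, or kept none of them. *)
Lemma unreused_heavy_bin_moves b : In b heavy -> reused b = false ->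
  (hq <= length (filter (in_bin f0 b) moved))%nat.
Proof.
  intros Hb Hc. apply filter_In in Hb. destruct Hb as [_ Hz].
  destruct (Rlt_dec _ _) as [Hz'|] in Hz; [|discriminate].
  rewrite load_before_round in Hz'.
  assert (Hin0 : (q + hq < length (filter (in_bin f0 b) small))%nat).
  { apply INR_lt. apply Rmult_lt_reg_r with (1 / INR Q); [apply Rdiv_lt_0_compat; lra|].
    replace (INR (q + hq) * (1 / INR Q)) with (INR (q + hq) / INR Q) by (field; lra). auto. }
  rewrite small_in_bin_split in Hin0.
  apply andb_false_iff in Hc. destruct Hc as [Hc|Hc].
  - apply negb_false_iff, existsb_exists in Hc. destruct Hc as [i [Hi Hib]].
    apply Nat.eqb_eq in Hib. pose proof (stayed_le b i Hi Hib). lia.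
  - replace (stayed b) with (@nil nat) in Hin0; [cbn in Hin0; lia|].
    destruct (stayed b) as [|i l] eqn:E; auto. exfalso.
    assert (Hi : In i (stayed b)) by (rewrite E; cbn; auto).
    apply filter_In in Hi. destruct Hi as [Hi _]. apply filter_In in Hi.
    assert (hosts small b = true) by (apply existsb_exists; exists i; tauto).
    congruence.
Qed.

Lemma large_and_reused_le_bins :
  (k + length (filter reused heavy) <= bins_used sigma (p0 + k) f1)%nat.
Proof.
  replace k with (length (map f1 large)) at 1 by (rewrite length_map; apply length_seq).
  rewrite <- length_app. apply bins_used_ge.
  - apply NoDup_app.
    + apply NoDup_map_NoDup_ForallPairs; [|apply seq_NoDup].
      intros i j Hi Hj. apply large_items_separate; auto.
    + apply NoDup_filter, NoDup_filter, NoDup_nodup.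
    + intros b Hb HbG. apply in_map_iff in Hb. destruct Hb as [i [Hib Hi]].
      apply filter_In in HbG. destruct HbG as [_ Hc].
      apply andb_true_iff in Hc. destruct Hc as [Hc _]. apply negb_true_iff in Hc.
      assert (hosts large b = true) by (apply existsb_exists; exists i; split; auto; apply Nat.eqb_eq; auto).
      congruence.
  - intros b Hb. rewrite Ha1. apply in_app_or in Hb. destruct Hb as [Hb|Hb].
    + apply in_map_iff in Hb. destruct Hb as [i [Hib Hi]]. exists i. split; auto. apply in_or_app; auto.
    + apply filter_In in Hb. destruct Hb as [_ Hc].
      apply andb_true_iff in Hc. destruct Hc as [_ Hc].
      apply existsb_exists in Hc. destruct Hc as [i [Hi Hib]]. apply Nat.eqb_eq in Hib.
      exists i; split; auto. apply in_or_app; auto.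
Qed.

Lemma unreused_heavy_bins_le_moved :
  INR (length (filter (fun b => negb (reused b)) heavy)) * INR hq <= INR (length moved).
Proof.
  eapply Rle_trans.
  { apply sumR_ge_const with (w := fun b => INR (length (filter (in_bin f0 b) moved))).
    intros b Hb. apply filter_In in Hb. destruct Hb as [Hb Hc]. apply negb_true_iff in Hc.
    apply le_INR, unreused_heavy_bin_moves; auto. }
  rewrite <- sumR_ones, (sumR_partition (fun _ => 1) f0 moved (nodup Nat.eq_dec (map f0 small))).
  2:{ apply NoDup_nodup. }
  2:{ intros i Hi. apply filter_In in Hi. destruct Hi as [Hi _]. apply nodup_In, in_map; auto. }
  unfold heavy. rewrite filter_filter.
  eapply Rle_trans; [|apply sumR_filter_le].
  - apply Req_le. f_equal. apply map_ext. intros b. rewrite sumR_ones. reflexivity.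
  - intros b _. apply sumR_ge0. intros; lra.
Qed.

(* Every bin that was loaded above [(q + hq)/Q] before the round either still costs a
   bin of its own, or [hq] of its small items were moved. *)
Theorem round_lower_bound :
  INR k + count_above (nodup Nat.eq_dec (map f0 small)) (load sigma p0 f0) (INR (q + hq) / INR Q)
   <= INR (bins_used sigma (p0 + k) f1) + INR (length moved) / INR hq.
Proof.
  assert (Hhqr : 1 <= INR hq) by (replace 1 with (INR 1) by (cbn; lra); apply le_INR; lia).
  pose proof large_and_reused_le_bins as HG. apply le_INR in HG. rewrite plus_INR in HG.
  pose proof unreused_heavy_bins_le_moved as HB.
  unfold count_above. fold heavy. rewrite <- (filter_length reused heavy), plus_INR.
  assert (INR (length (filter (fun b => negb (reused b)) heavy)) <= INR (length moved) / INR hq).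
  { apply Rmult_le_reg_r with (INR hq); [lra|].
    replace (INR (length moved) / INR hq * INR hq) with (INR (length moved)) by (field; lra). auto. }
  lra.
Qed.

End RoundLowerBound.

Lemma count_above_ext U l l' z : (forall b, In b U -> l b = l' b) ->
  count_above U l z = count_above U l' z.
Proof. intros H. unfold count_above. f_equal. f_equal. apply filter_ext_in. intros b Hb. rewrite H; auto. Qed.

Lemma ceil_div_spec x j : (0 < j)%nat ->
  (x <= (x + j - 1) / j * j)%nat /\ ((x + j - 1) / j * j < x + j)%nat.
Proof.
  intros Hj. pose proof (Nat.div_mod (x + j - 1) j ltac:(lia)).
  pose proof (Nat.mod_upper_bound (x + j - 1) j ltac:(lia)). nia.
Qed.

(** * The adversary *)

Section Adversary.

Variables (A : algorithm) (beta : nat -> R) (n : nat) (c astar a' : R) (V H J j0 hq : nat).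

(* [V * H * hq] small items of size [1/(H * hq)] have total volume [V]. *)
Definition Q_small : nat := H * hq.
Definition m_small : nat := V * H * hq.
Definition beta_n : R := Rabs (beta n).
Definition slack : R := INR V * (astar - a') / 8.
Definition num_large (j : nat) : nat := ((V * H + j - 1) / j)%nat.
Definition large_size (j : nat) : R := 1 - INR (j * hq) / INR Q_small.

Definition small_bins (S : list update) : list nat := nodup Nat.eq_dec (map (A S) (seq 0 m_small)).

(* [(j * hq + hq) / Q_small = (j + 1) / H]. *)
Definition violated (S : list update) (j : nat) : bool :=
  if Rlt_dec (a' * INR (num_large j) + beta_n + slack)
       (count_above (small_bins S) (load S (length S) (A S)) (INR (j * hq + hq) / INR Q_small))
  then true else false.

(* The default [j0] never occurs: see [threshold_violated]. *)
Definition threshold (S : list update) : nat :=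
  match find (violated S) (seq j0 (Datatypes.S J - j0)) with Some j => j | None => j0 end.

Definition round (S : list update) : list update :=
  insert_then_delete S (large_size (threshold S)) (num_large (threshold S)).

Definition good_prefix (S : list update) : Prop :=
  valid_input S /\ present S = seq 0 m_small /\ (m_small <= length S)%nat /\
  (forall i, (i < m_small)%nat -> nth_error S i = Some (Ins (1 / INR Q_small))).

Definition rounds (r : nat) : list update :=
  Nat.iter r round (repeat (Ins (1 / INR Q_small)) m_small).

(* Zero-size items bring the number of items up to exactly [n]. *)
Definition padded_rounds (r : nat) : list update :=
  rounds r ++ repeat (Ins 0) (n - num_items (rounds r)).

Hypothesis Hcomp : competitive A c beta.
Hypothesis Hc : c <= 1 + a'.
Hypothesis HH : H = (2 * (J + 1))%nat.
Hypothesis Hj : (2 <= j0 <= J)%nat.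
Hypothesis Hj0a : INR j0 <= INR H * a' / (1 + a').
Hypothesis Hj0b : INR H * a' / (1 + a') < INR j0 + 1.
Hypothesis Ha' : 0 < a'.
Hypothesis Haa : a' <= astar.
Hypothesis Ha1 : astar < 1.
Hypothesis HL : ln ((1 + astar) / (2 * astar)) = 1 / astar - 2.
Hypothesis Hu : 4 * (1 + a') <= INR H * a'.
Hypothesis Hh : 14 / INR H <= (astar - a') / 8.
Hypothesis Hhq : (1 <= hq)%nat.
Hypothesis HV : (1 <= V)%nat.
Hypothesis Hslack : a' + 2 * beta_n + slack < 3 * INR V * (astar - a') / 8.

Lemma threshold_range S : (j0 <= threshold S <= J)%nat.
Proof.
  unfold threshold. destruct (find (violated S) (seq j0 (Datatypes.S J - j0))) eqn:E; [|lia].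
  apply find_some in E. destruct E as [E _]. apply in_seq in E. lia.
Qed.

Lemma Q_small_pos : (0 < Q_small)%nat.
Proof. unfold Q_small. lia. Qed.

Lemma large_size_range j : (j <= J)%nat -> 0 <= large_size j <= 1.
Proof.
  intros Hjj. unfold large_size. pose proof Q_small_pos.
  assert (0 < INR Q_small) by (apply lt_0_INR; lia).
  assert (INR (j * hq) <= INR Q_small) by (apply le_INR; unfold Q_small; nia).
  assert (0 <= INR (j * hq)) by apply pos_INR.
  assert (0 <= INR (j * hq) / INR Q_small <= 1).
  { split; [apply Rmult_le_pos; [lra|left; apply Rinv_0_lt_compat; lra]|].
    apply Rmult_le_reg_r with (INR Q_small); [lra|].
    replace (INR (j * hq) / INR Q_small * INR Q_small) with (INR (j * hq)) by (field; lra). lra. }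
  lra.
Qed.

Lemma num_large_spec j : (0 < j)%nat ->
  (V * H <= num_large j * j)%nat /\ (num_large j * j < V * H + j)%nat.
Proof. intros. apply ceil_div_spec; auto. Qed.

Lemma num_large_le j : (j0 <= j)%nat -> (num_large j <= num_large j0)%nat.
Proof.
  intros Hjj. destruct (num_large_spec j ltac:(lia)) as [_ H2].
  destruct (num_large_spec j0 ltac:(lia)) as [H1 _].
  destruct (le_lt_dec (num_large j) (num_large j0)) as [|Hlt]; auto.
  assert ((num_large j0 + 1) * j <= num_large j * j)%nat by (apply Nat.mul_le_mono_r; lia).
  assert (num_large j0 * j0 <= num_large j0 * j)%nat by (apply Nat.mul_le_mono_l; lia).
  nia.
Qed.

Lemma good_prefix_round S : good_prefix S -> good_prefix (round S).
Proof.
  intros [Hv [Ha [Hm Hn]]]. pose proof (threshold_range S).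
  destruct (insert_then_delete_spec S m_small (large_size (threshold S)) (num_large (threshold S))
              Hv Ha Hm (large_size_range (threshold S) ltac:(lia))) as [Hv' [Hac' Hl']].
  unfold round, good_prefix. split; [auto|split; [auto|split]].
  - rewrite Hl'. lia.
  - intros i Hi. unfold insert_then_delete. rewrite nth_error_app1 by lia. auto.
Qed.

Lemma good_prefix_rounds r : good_prefix (rounds r).
Proof.
  induction r as [|r IH]; [|apply good_prefix_round; auto].
  assert (Hx : 0 <= 1 / INR Q_small <= 1).
  { pose proof Q_small_pos.
    assert (1 <= INR Q_small) by (replace 1 with (INR 1) by (cbn; lra); apply le_INR; lia).
    split; [apply Rlt_le, Rdiv_lt_0_compat; lra|].
    apply Rmult_le_reg_r with (INR Q_small); [lra|].
    replace (1 / INR Q_small * INR Q_small) with 1 by (field; lra). lra. }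
  destruct (valid_insert_block [] (1 / INR Q_small) m_small valid_nil Hx) as [Hv Ha].
  unfold good_prefix, rounds. cbn in Hv, Ha |- *. split; auto. split; [rewrite Ha; reflexivity|].
  rewrite repeat_length. split; [lia|]. intros i Hi. apply nth_error_repeat; auto.
Qed.

Lemma bins_le_packable sigma p K : valid_input sigma -> num_items sigma = n ->
  (p <= length sigma)%nat -> packable_in sigma p K ->
  INR (bins_used sigma p (alg_state A sigma p)) <= (1 + a') * INR K + beta_n.
Proof.
  intros Hv Hn Hp HK. pose proof (competitive_bins_le A c beta sigma p K Hcomp Hv Hp HK) as Hb.
  rewrite Hn in Hb. pose proof (Rle_abs (beta n)). pose proof (pos_INR K).
  assert (Rmax c 0 <= 1 + a') by (apply Rmax_lub; lra).
  assert (Rmax c 0 * INR K <= (1 + a') * INR K) by (apply Rmult_le_compat_r; lra).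
  unfold beta_n. lra.
Qed.

Section Round.

Variables (S T : list update).
Hypothesis HS : good_prefix S.
Hypothesis Hvalid : valid_input (round S ++ T).
Hypothesis Hitems : num_items (round S ++ T) = n.

Let sigma := round S ++ T.
Let j := threshold S.
Let k := num_large j.
Let x := large_size j.
Let p0 := length S.

Let round_input_eq : sigma = S ++ repeat (Ins x) k ++ (map Del (seq p0 k) ++ T).
Proof. unfold sigma, round, insert_then_delete. rewrite <- !app_assoc. reflexivity. Qed.

Let round_firstn i : (i <= k)%nat -> firstn (p0 + i) sigma = S ++ repeat (Ins x) i.
Proof.
  intros Hi. rewrite round_input_eq, firstn_app, firstn_all2 by lia. f_equal.
  replace (p0 + i - length S)%nat with i by (unfold p0; lia).
  assert (Hr : repeat (Ins x) k = repeat (Ins x) i ++ repeat (Ins x) (k - i))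
    by (rewrite <- repeat_app; f_equal; lia).
  rewrite Hr, <- app_assoc, firstn_app, repeat_length, Nat.sub_diag, firstn_all2
    by (rewrite repeat_length; lia).
  apply app_nil_r.
Qed.

Let round_length : (p0 + 2 * k <= length sigma)%nat.
Proof. rewrite round_input_eq, !length_app, repeat_length, length_map, length_seq. lia. Qed.

Let round_active i : (i <= k)%nat -> active_items sigma (p0 + i) = seq 0 m_small ++ seq p0 i.
Proof.
  intros Hi. destruct HS as [Hv [Ha _]].
  assert (Hx : 0 <= x <= 1) by (apply large_size_range; pose proof (threshold_range S); lia).
  rewrite active_items_prefix, round_firstn by lia.
  destruct (valid_insert_block S x i Hv Hx) as [_ ->]. rewrite Ha. reflexivity.
Qed.

Let round_active_start : active_items sigma p0 = seq 0 m_small.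
Proof. rewrite <- (Nat.add_0_r p0), round_active by lia. apply app_nil_r. Qed.

Let round_small_size i : (i < m_small)%nat -> item_size sigma i = 1 / INR Q_small.
Proof.
  intros Hi. destruct HS as [_ [_ [Hm Hn]]]. unfold item_size.
  rewrite round_input_eq, nth_error_app1, Hn by lia. reflexivity.
Qed.

Let round_large_size i : (p0 <= i < p0 + k)%nat -> item_size sigma i = x.
Proof.
  intros Hi. unfold item_size. rewrite round_input_eq, nth_error_app2 by (unfold p0 in *; lia).
  rewrite nth_error_app1 by (rewrite repeat_length; unfold p0 in *; lia).
  rewrite nth_error_repeat by (unfold p0 in *; lia). reflexivity.
Qed.

Let round_state_start : alg_state A sigma p0 = A S.
Proof. unfold alg_state. rewrite <- (Nat.add_0_r p0), round_firstn by lia. cbn. rewrite app_nil_r. reflexivity. Qed.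

Let round_load_start b : load sigma p0 (A S) b = load S (length S) (A S) b.
Proof. unfold sigma, round, insert_then_delete. rewrite <- !app_assoc. apply load_app. Qed.

Let threshold_level j' : INR (j' * hq + hq) / INR Q_small = INR (Datatypes.S j') * (1 / INR H).
Proof.
  unfold Q_small. replace (j' * hq + hq)%nat with (Datatypes.S j' * hq)%nat by lia.
  rewrite !mult_INR. assert (0 < INR hq) by (apply lt_0_INR; lia).
  assert (0 < INR H) by (apply lt_0_INR; lia). field; lra.
Qed.

Let volume_start : INR V = sumR (map (load sigma p0 (A S)) (small_bins S)).
Proof.
  unfold small_bins. rewrite <- round_active_start, <- volume_eq_sum_loads, round_active_start.
  rewrite (sumR_eq_const _ _ (1 / INR Q_small)).
  - rewrite length_seq. unfold Q_small, m_small. rewrite !mult_INR.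
    assert (0 < INR hq) by (apply lt_0_INR; lia). assert (0 < INR H) by (apply lt_0_INR; lia).
    field; lra.
  - intros i Hi. apply in_seq in Hi. apply round_small_size. lia.
Qed.

Let bins_start : INR (length (small_bins S)) <= (1 + a') * INR V + beta_n.
Proof.
  assert (Hpk : packable_in sigma p0 V).
  { apply (packable_small_items sigma p0 m_small Q_small V); auto.
    apply Q_small_pos. unfold m_small, Q_small. lia. }
  pose proof (bins_le_packable sigma p0 V Hvalid Hitems ltac:(lia) Hpk) as Hb.
  rewrite round_state_start in Hb. unfold bins_used in Hb. rewrite round_active_start in Hb.
  exact Hb.
Qed.

(* Otherwise the layer-cake bound of [threshold_counts_bound_volume] would contradict
   [Hslack] at the start of the round. *)
Lemma threshold_violated : violated S j = true.
Proof.
  unfold j, threshold. destruct (find (violated S) (seq j0 (Datatypes.S J - j0))) eqn:Ef.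
  { apply find_some in Ef. tauto. }
  exfalso. pose proof (find_none _ _ Ef) as Hno.
  assert (HHr : INR H = 2 * INR J + 2) by (rewrite HH, mult_INR, plus_INR; cbn; lra).
  assert (Hf0 : feasible sigma p0 (A S)).
  { rewrite <- round_state_start. apply (Hcomp sigma Hvalid p0). lia. }
  assert (0 <= slack) by (unfold slack; pose proof (pos_INR V); apply Rmult_le_pos; [nra|lra]).
  assert (3 * INR V * (astar - a') / 8 <= a' + 2 * beta_n + slack); [|lra].
  apply (threshold_counts_bound_volume (small_bins S) (load sigma p0 (A S)) H J j0 a' (INR V)
           beta_n slack (1 / INR H) (fun j' => INR (num_large j')));
    auto; try lra.
  - intros j' Hj'. assert (Hv' := Hno j' ltac:(apply in_seq; lia)). unfold violated in Hv'.
    destruct (Rlt_dec _ _) as [|Hnl] in Hv'; [discriminate|]. apply Rnot_lt_le in Hnl.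
    rewrite <- threshold_level, (count_above_ext _ _ (load S (length S) (A S))); auto.
  - intros j' Hj'. destruct (num_large_spec j' ltac:(lia)) as [_ H2].
    assert (0 < INR j') by (apply lt_0_INR; lia).
    apply lt_INR in H2. rewrite mult_INR, plus_INR, mult_INR in H2.
    apply Rlt_le. apply Rmult_lt_reg_r with (INR j'); [lra|].
    replace ((INR V * INR H / INR j' + 1) * INR j') with (INR V * INR H + INR j') by (field; lra).
    lra.
  - unfold beta_n; apply Rabs_pos.
  - apply pos_INR.
Qed.

Let moved_small : list nat :=
  filter (fun i => negb (Nat.eqb (alg_state A sigma (p0 + k) i) (A S i))) (seq 0 m_small).

(* The violated threshold leaves the algorithm no room to absorb the large items
   without moving [slack * hq] small items. *)
Let round_moved_small : slack * INR hq < INR (length moved_small).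
Proof.
  pose proof (threshold_range S) as Hjr. fold j in Hjr.
  set (q := (j * hq)%nat).
  destruct (num_large_spec j ltac:(lia)) as [Hk1 Hk2]. fold k in Hk1, Hk2.
  assert (Hact : active_items sigma (p0 + k) = seq 0 m_small ++ seq p0 k) by (apply round_active; lia).
  assert (Hm : (m_small <= p0)%nat) by (destruct HS as [_ [_ [Hm _]]]; exact Hm).
  assert (Hpk : packable_in sigma (p0 + k) k).
  { apply (packable_small_and_large sigma (p0 + k) m_small Q_small q k p0);
      [exact Hact|exact round_small_size|exact round_large_size|exact Hm|..];
      unfold q, m_small, Q_small; nia. }
  pose proof (bins_le_packable sigma (p0 + k) k Hvalid Hitems ltac:(lia) Hpk) as Hb.
  destruct (Hcomp sigma Hvalid (p0 + k)%nat ltac:(lia)) as [Hf _].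
  pose proof (round_lower_bound sigma p0 k m_small Q_small q hq (A S) (alg_state A sigma (p0 + k))
                Hvalid round_active_start Hact Hm round_small_size round_large_size Q_small_pos ltac:(unfold q, Q_small; nia) Hhq Hf)
    as Hround.
  pose proof threshold_violated as Hviol. unfold violated in Hviol.
  destruct (Rlt_dec _ _) as [Hvl|] in Hviol; [|discriminate].
  rewrite (count_above_ext _ _ (load sigma p0 (A S))) in Hvl by (intros; rewrite round_load_start; auto).
  fold k in Hvl. fold moved_small in Hround. unfold small_bins in Hvl. fold q in Hvl.
  assert (1 <= INR hq) by (replace 1 with (INR 1) by (cbn; lra); apply le_INR; lia).
  assert (Hsl : slack < INR (length moved_small) / INR hq) by lra.
  apply Rmult_lt_compat_r with (r := INR hq) in Hsl; [|lra].
  replace (INR (length moved_small) / INR hq * INR hq) with (INR (length moved_small)) in Hsl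
    by (field; lra).
  exact Hsl.
Qed.

Lemma round_moves :
  INR (moves A (round S ++ T) (length S)) + slack * INR hq <
  INR (moves A (round S ++ T) (length (round S))).
Proof.
  pose proof round_moved_small as HC.
  pose proof (moved_items_le_moves A sigma p0 k (seq 0 m_small) (seq_NoDup _ _)) as CL.
  rewrite round_state_start in CL. fold moved_small in CL.
  assert (CL' : (length moved_small <= list_sum (map (moves_at A sigma) (seq (Datatypes.S p0) k)))%nat).
  { apply CL. intros p Hp i Hi. split.
    - replace (p - 1)%nat with (p0 + (p - 1 - p0))%nat by lia. rewrite round_active by lia.
      apply in_or_app; auto.
    - assert (Hin : In i (active_items sigma p)).
      { replace p with (p0 + (p - p0))%nat by lia. rewrite round_active by lia. apply in_or_app; auto. }
      unfold active_items in Hin. apply filter_In in Hin. tauto. }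
  destruct HS as [HvS [HaS [HmS _]]].
  destruct (insert_then_delete_spec S m_small x k HvS HaS HmS
              ltac:(apply large_size_range; pose proof (threshold_range S); lia)) as [_ [_ Hlen]].
  fold sigma. unfold round. fold j k x. rewrite Hlen. fold p0.
  replace (p0 + 2 * k)%nat with (p0 + (k + k))%nat by lia.
  rewrite moves_add, seq_app, map_app, list_sum_app, !plus_INR.
  pose proof (pos_INR (list_sum (map (moves_at A sigma) (seq (Datatypes.S p0 + k) k)))).
  apply le_INR in CL'. lra.
Qed.

End Round.

Lemma rounds_0 : rounds 0 = repeat (Ins (1 / INR Q_small)) m_small.
Proof. reflexivity. Qed.

Lemma rounds_S r : rounds (Datatypes.S r) = round (rounds r).
Proof. reflexivity. Qed.

Lemma rounds_prefix r d : exists T, rounds (r + d) = rounds r ++ T.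
Proof.
  induction d as [|d [T HT]].
  - exists []. rewrite Nat.add_0_r, app_nil_r. reflexivity.
  - rewrite Nat.add_succ_r. rewrite rounds_S.
    unfold round, insert_then_delete. rewrite HT. eexists. rewrite <- app_assoc. reflexivity.
Qed.

(* Every update of [rounds r] beyond the initial insertions is one of a matching
   insertion/deletion pair. *)
Lemma rounds_length r : (length (rounds r) + m_small = 2 * num_items (rounds r))%nat.
Proof.
  induction r as [|r IH].
  - rewrite rounds_0, repeat_length, num_items_repeat. lia.
  - rewrite rounds_S. unfold round.
    rewrite num_items_insert_then_delete. unfold insert_then_delete.
    rewrite !length_app, repeat_length, length_map, length_seq. lia.
Qed.

Lemma rounds_num_items r : (num_items (rounds r) <= m_small + r * num_large j0)%nat.
Proof.
  induction r as [|r IH].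
  - rewrite rounds_0, num_items_repeat. lia.
  - rewrite rounds_S. unfold round. rewrite num_items_insert_then_delete.
    pose proof (num_large_le (threshold (rounds r)) ltac:(pose proof (threshold_range (rounds r)); lia)).
    lia.
Qed.

Lemma padded_rounds_valid nr : valid_input (padded_rounds nr).
Proof.
  destruct (good_prefix_rounds nr) as [Hv _].
  exact (proj1 (valid_insert_block (rounds nr) 0 (n - num_items (rounds nr)) Hv ltac:(lra))).
Qed.

Lemma padded_rounds_items nr : (num_items (rounds nr) <= n)%nat -> num_items (padded_rounds nr) = n.
Proof. intros. unfold padded_rounds. rewrite num_items_app, num_items_repeat. lia. Qed.

Lemma padded_rounds_moves nr : (num_items (rounds nr) <= n)%nat ->
  forall r, (r <= nr)%nat -> INR r * (slack * INR hq) <= INR (moves A (padded_rounds nr) (length (rounds r))).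
Proof.
  intros HR r. induction r as [|r IH]; intros Hr.
  - cbn. rewrite Rmult_0_l. apply pos_INR.
  - destruct (rounds_prefix (Datatypes.S r) (nr - Datatypes.S r)) as [T HT].
    replace (Datatypes.S r + (nr - Datatypes.S r))%nat with nr in HT by lia.
    assert (Hs : padded_rounds nr = round (rounds r) ++ (T ++ repeat (Ins 0) (n - num_items (rounds nr)))).
    { unfold padded_rounds. rewrite HT at 1. rewrite app_assoc. reflexivity. }
    pose proof (round_moves (rounds r) (T ++ repeat (Ins 0) (n - num_items (rounds nr)))
                  (good_prefix_rounds r)) as RM.
    rewrite <- Hs in RM. specialize (RM (padded_rounds_valid nr) (padded_rounds_items nr HR)).
    rewrite rounds_S. rewrite S_INR. specialize (IH ltac:(lia)). lra.
Qed.

(* [nr] rounds fit into [n] items and cost [slack * hq] moves each, while the input has at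
   most [2 n] updates. *)
Theorem adversary_recourse nr r0 :
  (num_items (rounds nr) <= n)%nat -> 0 <= r0 -> r0 * INR (2 * n) <= INR nr * (slack * INR hq) ->
  exists sigma, valid_input sigma /\ num_items sigma = n /\ recourse_at_least A sigma r0.
Proof.
  intros HR Hr0 Hbig. exists (padded_rounds nr).
  split; [apply padded_rounds_valid|split; [apply padded_rounds_items; auto|]].
  exists (length (rounds nr)). pose proof (rounds_length nr).
  destruct (good_prefix_rounds nr) as [_ [_ [HmS _]]].
  assert (Hm : (1 <= m_small)%nat) by (unfold m_small; rewrite HH; nia).
  split.
  - split; [lia|]. unfold padded_rounds. rewrite length_app. lia.
  - pose proof (padded_rounds_moves nr HR nr (le_n nr)).
    assert (INR (length (rounds nr)) <= INR (2 * n)) by (apply le_INR; lia).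
    assert (r0 * INR (length (rounds nr)) <= r0 * INR (2 * n)) by (apply Rmult_le_compat_l; lra).
    lra.
Qed.

End Adversary.

(** * Choice of the parameters *)

Definition floor_nat (x : R) : nat := Z.to_nat (up x - 1).

Lemma floor_nat_spec x : 0 <= x -> INR (floor_nat x) <= x < INR (floor_nat x) + 1.
Proof.
  intros Hx. destruct (archimed x) as [H1 H2].
  assert (Hz : (0 < up x)%Z) by (apply lt_IZR; lra).
  unfold floor_nat. rewrite INR_IZR_INZ, Z2Nat.id, minus_IZR by lia. cbn. lra.
Qed.

Lemma Rpower_split x d : 0 < x -> Rpower x (1 - d) * Rpower x d = x.
Proof. intros Hx. rewrite <- Rpower_plus. replace (1 - d + d) with 1 by ring. apply Rpower_1; auto. Qed.

Lemma Rpower_eventually_ge K y : 0 < y ->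
  exists N : nat, forall n : nat, (N <= n)%nat -> K <= Rpower (INR n) y.
Proof.
  intros Hy. set (K1 := Rmax K 1). set (X := Rpower K1 (1 / y)).
  assert (HK1 : 1 <= K1) by apply Rmax_r.
  assert (HX : 0 < X) by (unfold X, Rpower; apply exp_pos).
  destruct (INR_unbounded X) as [N HN]. exists N. intros n Hn.
  apply le_INR in Hn.
  assert (HXn : Rpower X y <= Rpower (INR n) y) by (apply Rle_Rpower_l; lra).
  unfold X in HXn. rewrite Rpower_mult in HXn. replace (1 / y * y) with 1 in HXn by (field; lra).
  rewrite Rpower_1 in HXn by lra. pose proof (Rmax_l K 1). fold K1 in H. lra.
Qed.

Lemma little_o_Rpower_linear (beta : nat -> R) K delta : 0 < K -> 0 < delta <= 1 ->
  little_o beta (fun n => K * Rpower (INR n) delta) -> little_o beta INR.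
Proof.
  intros HK Hd Hlo eta Heta. destruct (Hlo (eta / K) ltac:(apply Rdiv_lt_0_compat; lra)) as [N HN].
  exists (Nat.max N 1). intros n Hn. specialize (HN n ltac:(lia)).
  assert (Hn1 : 1 <= INR n) by (replace 1 with (INR 1) by (cbn; lra); apply le_INR; lia).
  assert (Hp : 0 < Rpower (INR n) delta) by (unfold Rpower; apply exp_pos).
  assert (Rpower (INR n) delta <= INR n).
  { rewrite <- (Rpower_1 (INR n)) at 2 by lra. apply Rle_Rpower; lra. }
  rewrite (Rabs_right (K * _)) in HN by (apply Rle_ge, Rmult_le_pos; lra).
  rewrite (Rabs_right (INR n)) by (apply Rle_ge, pos_INR).
  replace (eta / K * (K * Rpower (INR n) delta)) with (eta * Rpower (INR n) delta) in HN
    by (field; lra).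
  nra.
Qed.

(* [n] items of size [1] need [n] bins, and [OPT = n]. *)
Lemma competitive_ratio_ge_1 A r beta :
  competitive A r beta -> little_o beta INR -> 1 <= r.
Proof.
  intros Hc Hlo. destruct (Rle_lt_dec 1 r) as [|Hr]; auto. exfalso.
  set (r' := Rmax r 0).
  assert (Hr' : r' < 1) by (apply Rmax_lub_lt; lra).
  destruct (Hlo ((1 - r') / 2) ltac:(lra)) as [N HN].
  set (n := Nat.max N 1). specialize (HN n ltac:(lia)).
  set (sigma := repeat (Ins 1) n).
  destruct (valid_insert_block [] 1 n valid_nil ltac:(lra)) as [Hv Ha]. cbn in Hv, Ha.
  fold sigma in Hv, Ha.
  assert (Hlen : length sigma = n) by apply repeat_length.
  assert (Hact : active_items sigma n = seq 0 n) by (rewrite <- Hlen at 1; exact Ha).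
  assert (Hs : forall i, (i < n)%nat -> item_size sigma i = 1 / INR 1).
  { intros i Hi. unfold item_size, sigma. rewrite nth_error_repeat by auto. cbn. field. }
  assert (Hpk : packable_in sigma n n) by (apply (packable_small_items sigma n n 1 n); auto; lia).
  pose proof (competitive_bins_le A _ beta sigma n n Hc Hv ltac:(lia) Hpk) as Hb.
  destruct (Hc sigma Hv n ltac:(lia)) as [Hf _].
  pose proof (volume_le_bins_used sigma n (alg_state A sigma n) Hf) as Hvol.
  rewrite Hact, (sumR_eq_const _ _ 1), length_seq in Hvol.
  2:{ intros i Hi. apply in_seq in Hi. rewrite Hs by lia. cbn. field. }
  assert (Hni : num_items sigma = n) by apply num_items_repeat. rewrite Hni in Hb. fold r' in Hb.
  assert (Hn1 : 1 <= INR n) by (replace 1 with (INR 1) by (cbn; lra); apply le_INR; lia).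
  rewrite (Rabs_right (INR n)) in HN by (apply Rle_ge, pos_INR).
  pose proof (Rle_abs (beta n)).
  assert (0 < (1 - r') * INR n) by (apply Rmult_lt_0_compat; lra).
  nra.
Qed.

(* The levels [j/H]: [H ~ 112/e] and [j0/H ~ a'/(1+a')]. *)
Lemma threshold_grid astar e : 0 < astar < 1 -> 0 < e <= astar / 2 ->
  exists J j0 : nat,
    let H := (2 * (J + 1))%nat in let a' := astar - e in
    (2 <= j0 <= J)%nat /\ INR j0 <= INR H * a' / (1 + a') /\ INR H * a' / (1 + a') < INR j0 + 1 /\
    4 * (1 + a') <= INR H * a' /\ 14 / INR H <= e / 8 /\
    INR H * e <= 114 /\ 224 <= INR H * astar /\ INR H * astar / 8 <= INR j0.
Proof.
  intros Ha He. set (a' := astar - e).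
  set (J := floor_nat (56 / e)). exists J.
  destruct (floor_nat_spec (56 / e)) as [HJ1 HJ2]; [apply Rlt_le, Rdiv_lt_0_compat; lra|]. fold J in HJ1, HJ2.
  set (H := (2 * (J + 1))%nat).
  assert (HHr : INR H = 2 * INR J + 2) by (unfold H; rewrite mult_INR, plus_INR; cbn; lra).
  assert (He1 : 2 <= 1 / e).
  { apply Rmult_le_reg_r with e; [lra|]. replace (1 / e * e) with 1 by (field; lra). lra. }
  assert (HHlo : 112 < INR H * e).
  { replace 112 with (56 / e * e * 2) by (field; lra). rewrite HHr. nra. }
  assert (HHhi : INR H * e <= 114).
  { rewrite HHr. replace 114 with (56 / e * e * 2 + 2) by (field; lra).
    assert (INR J * e <= 56 / e * e) by (apply Rmult_le_compat_r; lra). nra. }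
  assert (HHa : 224 <= INR H * astar).
  { assert (INR H * (2 * e) <= INR H * astar) by (apply Rmult_le_compat_l; lra). lra. }
  set (j0 := floor_nat (INR H * a' / (1 + a'))). exists j0.
  destruct (floor_nat_spec (INR H * a' / (1 + a'))) as [Hj0a Hj0b].
  { apply Rlt_le, Rdiv_lt_0_compat; unfold a'; nra. }
  fold j0 in Hj0a, Hj0b. cbv zeta. fold H a'.
  assert (Hx4 : INR H * astar / 4 <= INR H * a' / (1 + a')).
  { apply Rmult_le_reg_r with (4 * (1 + a')); [unfold a'; lra|].
    replace (INR H * a' / (1 + a') * (4 * (1 + a'))) with (4 * (INR H * a')) by (field; unfold a'; lra).
    unfold a'. nra. }
  assert (Hxh : INR H * a' / (1 + a') < INR H / 2).
  { apply Rmult_lt_reg_r with (2 * (1 + a')); [unfold a'; lra|].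
    replace (INR H * a' / (1 + a') * (2 * (1 + a'))) with (2 * (INR H * a')) by (field; unfold a'; lra).
    replace (INR H / 2 * (2 * (1 + a'))) with (INR H * (1 + a')) by field. unfold a'. nra. }
  assert (Hj0R : INR H * astar / 8 <= INR j0) by lra.
  split; [split|].
  - apply INR_le. cbn. lra.
  - apply Nat.lt_succ_r, INR_lt. rewrite S_INR. lra.
  - repeat split; try lra; unfold a'; [nra|].
    apply Rmult_le_reg_r with (8 * INR H); [lra|].
    replace (14 / INR H * (8 * INR H)) with 112 by (field; lra).
    replace (e / 8 * (8 * INR H)) with (INR H * e) by field. lra.
Qed.

(* [V ~ n^delta] units of volume made of [V * H * hq ~ n/2] small items. *)
Lemma small_items_parameters (n H : nat) (P Pc : R) :
  (1 <= H)%nat -> 1 <= P -> Pc * P = INR n -> 8 * INR H <= Pc ->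
  exists V hq : nat, INR V <= P < INR V + 1 /\ (1 <= V)%nat /\ (1 <= hq)%nat /\
    (2 * (V * H * hq) <= n)%nat /\ INR n / 4 <= INR (V * H * hq).
Proof.
  intros HH HP HPP HPc. set (V := floor_nat P).
  destruct (floor_nat_spec P) as [HV1 HV2]; [lra|]. fold V in HV1, HV2.
  assert (HV : (1 <= V)%nat).
  { apply (INR_lt 0 V). cbn. lra. }
  assert (HVr : 1 <= INR V) by (replace 1 with (INR 1) by (cbn; lra); apply le_INR; lia).
  assert (HHr : 1 <= INR H) by (replace 1 with (INR 1) by (cbn; lra); apply le_INR; lia).
  assert (HVH : INR (V * H) <= INR n / 8).
  { rewrite mult_INR, <- HPP.
    assert (INR V * INR H <= P * (Pc / 8)) by (apply Rmult_le_compat; lra). lra. }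
  set (D := (2 * (V * H))%nat).
  assert (HDn : (0 < D <= n)%nat).
  { split; [unfold D; nia|]. apply INR_le. unfold D. rewrite mult_INR. cbn.
    pose proof (pos_INR n). lra. }
  set (hq := (n / D)%nat). exists V, hq.
  pose proof (Nat.div_mod n D ltac:(lia)) as Hdm. pose proof (Nat.mod_upper_bound n D ltac:(lia)).
  fold hq in Hdm.
  assert (Hn : (n < 2 * (V * H * hq) + 2 * (V * H))%nat) by (unfold D in *; nia).
  apply lt_INR in Hn. rewrite plus_INR, !mult_INR in Hn. replace (INR 2) with 2 in Hn by (cbn; ring).
  repeat split; auto.
  - apply Nat.div_str_pos; lia.
  - unfold D in Hdm. nia.
  - rewrite mult_INR in HVH. rewrite !mult_INR. pose proof (pos_INR n). lra.
Qed.

Lemma rounds_fit (n m K : nat) : (0 < K)%nat -> (2 * m <= n)%nat ->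
  (m + (n - m) / K * K <= n)%nat /\ INR n / 2 < (INR ((n - m) / K) + 1) * INR K.
Proof.
  intros HK Hm. set (R := ((n - m) / K)%nat).
  pose proof (Nat.div_mod (n - m) K ltac:(lia)) as Hdm.
  pose proof (Nat.mod_upper_bound (n - m) K ltac:(lia)). fold R in Hdm.
  split; [nia|].
  assert (INR n < INR (2 * (R * K + K))) by (apply lt_INR; nia).
  rewrite mult_INR, plus_INR, mult_INR in H0. cbn in H0. lra.
Qed.

Lemma rounds_many (n r K j0 V H : nat) (astar P Pc : R) :
  0 < astar -> 0 < P -> Pc * P = INR n -> INR V <= P ->
  INR n / 2 < (INR r + 1) * INR K -> INR K * INR j0 < 2 * (INR V * INR H) ->
  INR H * astar / 8 <= INR j0 -> 8 * INR H <= Pc -> 224 <= INR H * astar ->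
  Pc * astar / 64 <= INR r.
Proof.
  intros Ha HP HPP HVP HRK HKj Hj0 HPc HHa.
  assert (0 < INR H) by nra. pose proof (pos_INR r). pose proof (pos_INR V). pose proof (pos_INR K).
  assert (Hj0pos : 28 <= INR j0) by lra.
  assert (Pc * INR j0 < (INR r + 1) * 4 * INR H).
  { apply Rmult_lt_reg_l with P; [lra|].
    assert (INR n / 2 * INR j0 < (INR r + 1) * INR K * INR j0) by (apply Rmult_lt_compat_r; lra).
    assert ((INR r + 1) * (INR K * INR j0) < (INR r + 1) * (2 * (INR V * INR H))) by nra.
    assert ((INR r + 1) * (INR V * INR H) <= (INR r + 1) * (P * INR H)).
    { apply Rmult_le_compat_l; [lra|]. apply Rmult_le_compat_r; lra. }
    replace (P * (Pc * INR j0)) with (INR n * INR j0) by (rewrite <- HPP; ring).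
    nra. }
  assert (Pc * (INR H * astar / 8) <= Pc * INR j0) by (apply Rmult_le_compat_l; nra).
  nra.
Qed.

Lemma round_cost_ge (n V H hq : nat) (astar e : R) : 0 < e ->
  INR n / 4 <= INR (V * H * hq) -> INR H * e <= 114 -> 0 < INR H ->
  INR n * (e * e) / 3648 <= slack astar (astar - e) V * INR hq.
Proof.
  intros He Hm HHe HH. unfold slack. replace (astar - (astar - e)) with e by ring.
  rewrite !mult_INR in Hm. pose proof (pos_INR n).
  apply Rmult_le_reg_r with (INR H); [lra|].
  assert (INR n * e / 32 <= INR V * e * INR hq / 8 * INR H) by nra.
  assert (INR n * e / 32 * (INR H * e) <= INR n * e / 32 * 114) by (apply Rmult_le_compat_l; nra).
  nra.
Qed.

Lemma slack_dominates_additive (beta : nat -> R) (n V : nat) (astar e eps P : R) :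
  0 < e -> astar - e < 1 -> 0 < eps <= 4 * e -> 0 <= P < INR V + 1 -> 2 + 17 / e <= P ->
  Rabs (beta n) <= 1 / 128 * Rabs (eps * P) ->
  astar - e + 2 * beta_n beta n + slack astar (astar - e) V < 3 * INR V * (astar - (astar - e)) / 8.
Proof.
  intros He Ha' Heps HP HP2 Hb. unfold beta_n, slack. replace (astar - (astar - e)) with e by ring.
  rewrite (Rabs_right (eps * P)) in Hb by (apply Rle_ge, Rmult_le_pos; lra).
  assert (eps * P <= 4 * e * (INR V + 1)) by (apply Rmult_le_compat; lra).
  assert (8 < e * INR V).
  { assert (e * (1 + 17 / e) <= e * INR V) by (apply Rmult_le_compat_l; lra).
    replace (e * (1 + 17 / e)) with (e + 17) in H0 by (field; lra). lra. }
  assert (0 < 17 / e) by (apply Rdiv_lt_0_compat; lra).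
  assert (e * 1 <= e * INR V) by (apply Rmult_le_compat_l; lra).
  lra.
Qed.

Lemma recourse_rate (astar e eps Pc n nr cost : R) :
  0 < astar -> 0 < e -> 0 < eps <= 4 * e -> 0 <= Pc -> 0 <= n ->
  Pc * astar / 64 <= nr -> n * (e * e) / 3648 <= cost ->
  astar / 10000000 * eps ^ 2 * Pc * (2 * n) <= nr * cost.
Proof.
  intros Ha He Heps HPc Hn Hnr Hcost.
  assert (0 <= astar * Pc * n) by (apply Rmult_le_pos; [apply Rmult_le_pos|]; lra).
  assert (eps ^ 2 <= 16 * (e * e)) by (cbn; nra).
  assert (eps ^ 2 * (astar * Pc * n) <= 16 * (e * e) * (astar * Pc * n)) by (apply Rmult_le_compat_r; lra).
  assert (Pc * astar / 64 * (n * (e * e) / 3648) <= nr * cost).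
  { apply Rmult_le_compat; try lra; apply Rmult_le_pos; try lra; apply Rmult_le_pos; nra. }
  assert (0 <= (e * e) * (astar * Pc * n)) by (apply Rmult_le_pos; nra).
  nra.
Qed.

Lemma recourse_lower_bound astar eps delta (A : algorithm) (beta : nat -> R) :
  0 < astar < 1 -> ln ((1 + astar) / (2 * astar)) = 1 / astar - 2 ->
  0 < eps < 2 * astar -> 0 < delta < 1 ->
  competitive A (1 + astar - eps) beta ->
  little_o beta (fun n => eps * Rpower (INR n) delta) ->
  exists N : nat, forall n : nat, (N <= n)%nat ->
    exists sigma, valid_input sigma /\ num_items sigma = n /\
      recourse_at_least A sigma (astar / 10000000 * eps ^ 2 * Rpower (INR n) (1 - delta)).
Proof.
  intros Ha HL Heps Hd Hcomp Hlo.
  set (e := Rmin eps (astar / 2)).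
  assert (He : 0 < e <= astar / 2) by (split; [apply Rmin_glb_lt|apply Rmin_r]; lra).
  assert (Hee : e <= eps) by apply Rmin_l.
  assert (Heps4 : eps <= 4 * e) by (unfold e, Rmin; destruct (Rle_dec eps (astar / 2)); lra).
  destruct (threshold_grid astar e Ha He) as [J [j0 HG]]. cbv zeta in HG.
  set (H := (2 * (J + 1))%nat) in HG. set (a' := astar - e) in HG.
  destruct HG as [Hj [Hj0a [Hj0b [Hu [Hh [HHe [HHa Hj0R]]]]]]].
  destruct (Hlo (1 / 128) ltac:(lra)) as [N1 HN1].
  destruct (Rpower_eventually_ge (2 + 17 / e) delta ltac:(lra)) as [N2 HN2].
  destruct (Rpower_eventually_ge (8 * INR H) (1 - delta) ltac:(lra)) as [N3 HN3].
  exists (Nat.max N1 (Nat.max N2 (Nat.max N3 1))). intros n Hn.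
  specialize (HN1 n ltac:(lia)). specialize (HN2 n ltac:(lia)). specialize (HN3 n ltac:(lia)).
  set (P := Rpower (INR n) delta) in *. set (Pc := Rpower (INR n) (1 - delta)) in *.
  assert (Hn1 : 1 <= INR n) by (replace 1 with (INR 1) by (cbn; lra); apply le_INR; lia).
  assert (HPP : Pc * P = INR n) by (apply Rpower_split; lra).
  assert (HP0 : 0 < P) by (unfold P, Rpower; apply exp_pos).
  assert (HPc0 : 0 <= Pc) by (unfold Pc, Rpower; apply Rlt_le, exp_pos).
  assert (0 < 17 / e) by (apply Rdiv_lt_0_compat; lra).
  destruct (small_items_parameters n H P Pc ltac:(unfold H; lia) ltac:(lra) HPP HN3)
    as [V [hq [[HV1 HV2] [HV [Hhq [Hm2 Hm4]]]]]].
  set (K := num_large V H j0).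
  destruct (num_large_spec V H j0 ltac:(lia)) as [Hk1 Hk2]. fold K in Hk1, Hk2.
  destruct (rounds_fit n (m_small V H hq) K ltac:(destruct K; nia) Hm2) as [Hfit HRK].
  apply (adversary_recourse A beta n (1 + astar - eps) astar a' V H J j0 hq Hcomp
           ltac:(unfold a'; lra) eq_refl Hj Hj0a Hj0b ltac:(unfold a'; lra) ltac:(unfold a'; lra)
           ltac:(lra) HL Hu ltac:(unfold a'; replace (astar - (astar - e)) with e by ring; lra)
           Hhq HV (slack_dominates_additive beta n V astar e eps P
                     ltac:(lra) ltac:(lra) ltac:(lra) ltac:(lra) HN2 HN1)
           ((n - m_small V H hq) / K)).
  - pose proof (rounds_num_items A beta n astar a' V H J j0 hq eq_refl Hj Hhq HV ((n - m_small V H hq) / K)).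
    fold K in H0. lia.
  - pose proof (pow_le eps 2 ltac:(lra)). apply Rmult_le_pos; [|lra]. apply Rmult_le_pos; [|lra]. lra.
  - rewrite mult_INR. replace (INR 2) with 2 by (cbn; ring).
    apply (recourse_rate astar e eps Pc (INR n)); try lra.
    + apply (rounds_many n _ K j0 V H astar P Pc); try lra.
      apply lt_INR in Hk2. rewrite mult_INR, plus_INR, mult_INR in Hk2.
      assert (INR j0 <= INR V * INR H); [|lra].
      assert (INR j0 <= INR H) by (apply le_INR; unfold H; lia).
      assert (1 <= INR V) by (replace 1 with (INR 1) by (cbn; lra); apply le_INR; lia). nra.
    + apply (round_cost_ge n V H hq); try lra. apply lt_0_INR. unfold H; lia.
Qed.

Theorem theorem2p1 :
  forall w : R, is_LambertWm1 (- 2 / exp 3) w ->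
  let alpha := 1 - 1 / (w + 1) in
  exists c : R, 0 < c /\
  forall (eps delta : R), 0 < eps -> 0 < delta < 1 / 2 ->
  forall (A : algorithm) (beta : nat -> R),
    competitive A (alpha - eps) beta ->
    little_o beta (fun n => eps * Rpower (INR n) delta) ->
    exists N : nat, forall n : nat, (N <= n)%nat ->
      exists sigma : list update,
        valid_input sigma /\ num_items sigma = n /\
        recourse_at_least A sigma (c * eps ^ 2 * Rpower (INR n) (1 - delta)).
Proof.
  intros w Hw alpha.
  destruct (lambertWm1_threshold w Hw) as [Ha HL]. set (astar := -1 / (w + 1)) in *.
  assert (Halpha : alpha - 1 = astar) by (unfold alpha, astar, Rdiv; ring).
  exists (astar / 10000000). split; [apply Rdiv_lt_0_compat; lra|].
  intros eps delta Heps Hdelta A beta Hcomp Hlo.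
  replace (alpha - eps) with (1 + astar - eps) in Hcomp by lra.
  destruct (Rlt_le_dec eps (2 * astar)) as [Hsmall|Hlarge].
  - apply (recourse_lower_bound astar eps delta A beta); auto; lra.
  - pose proof (competitive_ratio_ge_1 A _ beta Hcomp
                  (little_o_Rpower_linear beta eps delta Heps ltac:(lra) Hlo)).
    lra.
Qed.
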